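(* Let $\varepsilon>0$, $\theta_0>0$, $N=2K+1$, $h=L/N$, and assume the mobility satisfies $\mathcal{M}(x)\ge\mathcal{M}_0>0$ for $x\in[-1,1]$. Let $\Phi\in C^6_{\rm per}(\Omega)$ with $\|\Phi\|_{L^\infty}<1$, and set $\phi^0:=\mathcal{P}_h(\mathcal{P}_N\Phi)$. Let $(\phi^m,\mu^m)_{m\ge1}$ be generated by the scheme $$\frac{\phi^{m}-\phi^{m-1}}{\Delta t}=\nabla_h\cdot(\check{\mathcal{M}}^{m-1}\nabla_h\mu^{m}),\qquad \mu^{m}=\ln(1+\phi^{m})-\ln(1-\phi^{m})-\theta_0\phi^{m-1}-\varepsilon^2\Delta_h\phi^{m}.$$ Then $(\Phi,1)_{L^2}=\langle\phi^0,1\rangle$, and, for any $\Delta t>0$, $h>0$ and $m\in\mathbb{N}$, $$E_h(\phi^m)+\Delta t\,[\check{\mathcal{M}}^{m-1}\nabla_h\mu^m,\nabla_h\mu^m]\le E_h(\phi^{m-1}),$$ so that $E_h(\phi^m)\le E_h(\phi^0)\le C_6$ with $C_6>0$ independent of $h$. Consequently $$\|\nabla_h\phi^m\|_2\le\sqrt{2C_6+\theta_0|\Omega|}\,\varepsilon^{-1}=:C_7\quad\forall m\in\mathbb{N}.$$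
   Context: $\Omega=(0,L)^3$, periodic; $p_i=(i-\tfrac12)h$. $\mathcal{C}_{\rm per}$: real $N$-periodic grid functions on cell centers; $\langle\nu,\xi\rangle=h^3\sum_{i,j,k=1}^N\nu_{i,j,k}\xi_{i,j,k}$; $\|\nu\|_2^2=\langle\nu,\nu\rangle$. $\mathcal{P}_N$ is the Fourier projection of $C_{\rm per}(\Omega)$ onto $\Omega$-periodic trigonometric polynomials of degree at most $K$ in each variable; $\mathcal{P}_h$ is evaluation at cell centers $(p_i,p_j,p_k)$. Face differences $D_x\nu_{i+1/2,j,k}=(\nu_{i+1,j,k}-\nu_{i,j,k})/h$ (similarly $D_y,D_z$), and for face vector fields $[\vec f,\vec g]=h^3\sum_{i,j,k=1}^N(f^x_{i+1/2,j,k}g^x_{i+1/2,j,k}+f^y_{i,j+1/2,k}g^y_{i,j+1/2,k}+f^z_{i,j,k+1/2}g^z_{i,j,k+1/2})$; $\nabla_h\nu=(D_x\nu,D_y\nu,D_z\nu)$ and $\|\nabla_h\nu\|_2^2=[\nabla_h\nu,\nabla_h\nu]$. $\Delta_h$ is the standard 7-point discrete Laplacian. Face mobility $\check{\mathcal{M}}^{n}_{i+1/2,j,k}=\mathcal{M}(\tfrac12(\phi^n_{i+1,j,k}+\phi^n_{i,j,k}))$ etc., and $\nabla_h\cdot(\mathcal{D}\nabla_h\nu)=d_x(\mathcal{D}D_x\nu)+d_y(\mathcal{D}D_y\nu)+d_z(\mathcal{D}D_z\nu)$ with $d_x f_{i,j,k}=(f_{i+1/2,j,k}-f_{i-1/2,j,k})/h$.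 Discrete energy: $E_h(\phi)=\langle1+\phi,\ln(1+\phi)\rangle+\langle1-\phi,\ln(1-\phi)\rangle+\frac{\varepsilon^2}{2}\|\nabla_h\phi\|_2^2-\frac{\theta_0}{2}\|\phi\|_2^2$. *)

From Stdlib Require Import Reals Lra Lia.
From Coquelicot Require Import Coquelicot.
Open Scope R_scope.

Definition fun3 := R -> R -> R -> R.

Definition cont3 (f : fun3) : Prop :=
  forall x y z : R,
    continuous (fun p : R * R * R => f (fst (fst p)) (snd (fst p)) (snd p)) (x, y, z).

Definition pdx (f : fun3) : fun3 := fun x y z => Derive (fun t => f t y z) x.
Definition pdy (f : fun3) : fun3 := fun x y z => Derive (fun t => f x t z) y.
Definition pdz (f : fun3) : fun3 := fun x y z => Derive (fun t => f x y t) z.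

Fixpoint Ck (k : nat) (f : fun3) : Prop :=
  cont3 f /\
  match k with
  | O => True
  | S k' =>
      (forall x y z, ex_derive (fun t => f t y z) x /\
                     ex_derive (fun t => f x t z) y /\
                     ex_derive (fun t => f x y t) z) /\
      Ck k' (pdx f) /\ Ck k' (pdy f) /\ Ck k' (pdz f)
  end.

Definition periodic3 (L : R) (f : fun3) : Prop :=
  forall x y z, f (x + L) y z = f x y z /\ f x (y + L) z = f x y z /\
                f x y (z + L) = f x y z.

Definition C6per (L : R) (f : fun3) : Prop := periodic3 L f /\ Ck 6 f.

Definition intOmega (L : R) (f : fun3) : R :=
  RInt (fun x => RInt (fun y => RInt (fun z => f x y z) 0 L) 0 L) 0 L.

Fixpoint rsum (n : nat) (f : nat -> R) : R :=
  match n with O => 0 | S n' => rsum n' f + f n' end.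

(* Fourier projection P_N onto trigonometric polynomials of degree <= K in
   each variable:  P_N f (x) = sum_{k in [-K,K]^3} hat f_k e^{2 pi i k.x/L},
   hat f_k = L^{-3} int_Omega f(y) e^{-2 pi i k.y/L} dy.  Summing over the
   symmetric index set, this is (exactly) the real expression below. *)
Definition PN (L : R) (K : nat) (f : fun3) : fun3 := fun x1 x2 x3 =>
  / (L ^ 3) *
  rsum (2 * K + 1) (fun a => rsum (2 * K + 1) (fun b => rsum (2 * K + 1) (fun c =>
    let k1 := INR a - INR K in
    let k2 := INR b - INR K in
    let k3 := INR c - INR K in
    intOmega L (fun y1 y2 y3 =>
      f y1 y2 y3 *
      cos (2 * PI * (k1 * (x1 - y1) + k2 * (x2 - y2) + k3 * (x3 - y3)) / L))))).

(* ---------- grid functions ----------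
   A grid function is nat -> nat -> nat -> R; only indices 0..N-1 matter,
   index i (0-based) is the cell center p_{i+1} = (i + 1/2) h.
   Periodicity is built into the operators via indices mod N. *)

Definition gf := nat -> nat -> nat -> R.

Definition sp (N i : nat) : nat := (S i) mod N.
Definition pp (N i : nat) : nat := (i + N - 1) mod N.

Definition sum3 (N : nat) (f : gf) : R :=
  rsum N (fun i => rsum N (fun j => rsum N (fun k => f i j k))).

Definition ip (N : nat) (h : R) (nu xi : gf) : R :=
  h ^ 3 * sum3 N (fun i j k => nu i j k * xi i j k).
Definition norm2sq (N : nat) (h : R) (nu : gf) : R := ip N h nu nu.

Definition Ph (h : R) (f : fun3) : gf := fun i j k =>
  f ((INR i + /2) * h) ((INR j + /2) * h) ((INR k + /2) * h).

(* face differences; the value stored at index i is the one at face i+1/2 *)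
Definition Dx (N : nat) (h : R) (nu : gf) : gf :=
  fun i j k => (nu (sp N i) j k - nu i j k) / h.
Definition Dy (N : nat) (h : R) (nu : gf) : gf :=
  fun i j k => (nu i (sp N j) k - nu i j k) / h.
Definition Dz (N : nat) (h : R) (nu : gf) : gf :=
  fun i j k => (nu i j (sp N k) - nu i j k) / h.

(* face vector field: (f^x, f^y, f^z), each indexed by the lower cell *)
Record facefield := FF { fx : gf; fy : gf; fz : gf }.

Definition fip (N : nat) (h : R) (f g : facefield) : R :=
  h ^ 3 * sum3 N (fun i j k =>
    fx f i j k * fx g i j k + fy f i j k * fy g i j k + fz f i j k * fz g i j k).

Definition grad (N : nat) (h : R) (nu : gf) : facefield :=
  FF (Dx N h nu) (Dy N h nu) (Dz N h nu).

Definition gradnorm2sq (N : nat) (h : R) (nu : gf) : R :=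
  fip N h (grad N h nu) (grad N h nu).

Definition mobface (N : nat) (M : R -> R) (phi : gf) : facefield :=
  FF (fun i j k => M ((phi (sp N i) j k + phi i j k) / 2))
     (fun i j k => M ((phi i (sp N j) k + phi i j k) / 2))
     (fun i j k => M ((phi i j (sp N k) + phi i j k) / 2)).

Definition fmul (D f : facefield) : facefield :=
  FF (fun i j k => fx D i j k * fx f i j k)
     (fun i j k => fy D i j k * fy f i j k)
     (fun i j k => fz D i j k * fz f i j k).

Definition divh (N : nat) (h : R) (f : facefield) : gf := fun i j k =>
  (fx f i j k - fx f (pp N i) j k) / h +
  (fy f i j k - fy f i (pp N j) k) / h +
  (fz f i j k - fz f i j (pp N k)) / h.

Definition lap (N : nat) (h : R) (nu : gf) : gf := fun i j k =>
  (nu (sp N i) j k - 2 * nu i j k + nu (pp N i) j k) / h ^ 2 +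
  (nu i (sp N j) k - 2 * nu i j k + nu i (pp N j) k) / h ^ 2 +
  (nu i j (sp N k) - 2 * nu i j k + nu i j (pp N k)) / h ^ 2.

Definition cst1 : gf := fun _ _ _ => 1.

Definition Eh (N : nat) (h eps theta0 : R) (phi : gf) : R :=
  ip N h (fun i j k => 1 + phi i j k) (fun i j k => ln (1 + phi i j k)) +
  ip N h (fun i j k => 1 - phi i j k) (fun i j k => ln (1 - phi i j k)) +
  eps ^ 2 / 2 * gradnorm2sq N h phi -
  theta0 / 2 * norm2sq N h phi.

From Pilot Require Import Defs.
From Stdlib Require Import Reals Lra Lia IndefiniteDescription Classical.
From Coquelicot Require Import Coquelicot.
(* [Reals] exports its own [Dx]; re-import [Defs] so that [Dx] is the face difference. *)
Import Defs.
Open Scope R_scope.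

(* With N = 2K+1 cell centres, the discrete sums of cos and sin of every Fourier
   mode |k_i| <= K vanish except for k = 0, so the grid mass of P_h P_N Phi is the zeroth
   Fourier coefficient, i.e. the integral of Phi.

   The scheme is a convex splitting: the entropy and the gradient energy are
   convex and treated implicitly, the concave part -theta0/2 phi^2 explicitly, hence
   E_h(phi^m) - E_h(phi^(m-1)) <= <phi^m - phi^(m-1), mu^m>, and summation by parts
   turns the right-hand side into -dt [M grad mu, grad mu] <= 0.

   E_h(phi^0) <= 4 |Omega| + eps^2/2 ||grad_h phi^0||^2, and the grid
   difference quotients of P_N Phi are bounded independently of K: integrating by parts
   six times gives |k|^6 decay of the Fourier coefficients of Phi in C^6, so
   sum_k |k| |hat Phi_k| converges.  Conversely the entropy is nonnegative and |phi| < 1,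
   so E_h(phi) >= eps^2/2 ||grad_h phi||^2 - theta0/2 |Omega|. *)

Lemma rsum_ext n f g : (forall i, (i < n)%nat -> f i = g i) -> rsum n f = rsum n g.
Proof.
  induction n; simpl; intros H; auto.
  rewrite IHn by (intros; apply H; lia). rewrite H by lia. reflexivity.
Qed.

Lemma rsum_plus n f g : rsum n (fun i => f i + g i) = rsum n f + rsum n g.
Proof. induction n; simpl; [lra|]. rewrite IHn. lra. Qed.

Lemma rsum_minus n f g : rsum n (fun i => f i - g i) = rsum n f - rsum n g.
Proof. induction n; simpl; [lra|]. rewrite IHn. lra. Qed.

Lemma rsum_scal n c f : rsum n (fun i => c * f i) = c * rsum n f.
Proof. induction n; simpl; [lra|]. rewrite IHn. lra. Qed.

Lemma rsum_le n f g : (forall i, (i < n)%nat -> f i <= g i) -> rsum n f <= rsum n g.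
Proof.
  induction n; simpl; intros H; [lra|].
  assert (rsum n f <= rsum n g) by (apply IHn; intros; apply H; lia).
  assert (f n <= g n) by (apply H; lia). lra.
Qed.

Lemma rsum_const n c : rsum n (fun _ => c) = INR n * c.
Proof. induction n; simpl rsum; [simpl; lra|]. rewrite IHn, S_INR. lra. Qed.

Lemma rsum_zero n : rsum n (fun _ => 0) = 0.
Proof. rewrite rsum_const. ring. Qed.

Lemma rsum_abs n f : Rabs (rsum n f) <= rsum n (fun i => Rabs (f i)).
Proof.
  induction n; simpl; [rewrite Rabs_R0; lra|].
  eapply Rle_trans; [apply Rabs_triang|]. lra.
Qed.

Lemma rsum_S n f : rsum (S n) f = rsum n f + f n.
Proof. reflexivity. Qed.

Lemma rsum_Sl n f : rsum (S n) f = f O + rsum n (fun i => f (S i)).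
Proof. induction n; simpl in *; [lra|]. rewrite IHn. lra. Qed.

Lemma rsum_swap n m f :
  rsum n (fun i => rsum m (fun j => f i j)) = rsum m (fun j => rsum n (fun i => f i j)).
Proof.
  induction n; simpl.
  - induction m; simpl; lra.
  - rewrite IHn, <- rsum_plus. reflexivity.
Qed.

Lemma rsum_add n m f : rsum (n + m) f = rsum n f + rsum m (fun i => f (n + i)%nat).
Proof.
  induction m; simpl.
  - rewrite Nat.add_0_r. lra.
  - rewrite Nat.add_succ_r. simpl. rewrite IHm. lra.
Qed.

Lemma rsum_rev n f : rsum n (fun i => f (n - 1 - i)%nat) = rsum n f.
Proof.
  induction n; [reflexivity|].
  rewrite rsum_Sl, rsum_S.
  replace (S n - 1 - 0)%nat with n by lia.
  rewrite <- IHn, Rplus_comm. f_equal. apply rsum_ext. intros. f_equal. lia.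
Qed.

Lemma rsum_telescope n (T : nat -> R) : rsum n (fun l => T (S l) - T l) = T n - T O.
Proof. induction n; simpl; [ring|]. rewrite IHn. ring. Qed.

Lemma rsum_indicator n K (g : nat -> R) : (K < n)%nat ->
  rsum n (fun c => if Nat.eqb c K then g c else 0) = g K.
Proof.
  assert (H0 : forall n, (n <= K)%nat -> rsum n (fun c => if Nat.eqb c K then g c else 0) = 0).
  { induction n0; intros H; simpl; auto.
    rewrite IHn0 by lia. destruct (Nat.eqb_spec n0 K); [lia|]. ring. }
  induction n; intros H; [lia|]. rewrite rsum_S.
  destruct (Nat.eqb_spec n K).
  - subst. rewrite H0 by lia. ring.
  - rewrite IHn by lia. ring.
Qed.

Lemma sp_small N i : (S i < N)%nat -> sp N i = S i.
Proof. intros; unfold sp; apply Nat.mod_small; lia. Qed.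

Lemma sp_last N : (0 < N)%nat -> sp N (N - 1) = O.
Proof. intros; unfold sp. replace (S (N-1)) with N by lia. apply Nat.Div0.mod_same. Qed.

Lemma sp_lt N i : (0 < N)%nat -> (sp N i < N)%nat.
Proof. intros; unfold sp; apply Nat.mod_upper_bound; lia. Qed.

Lemma pp_sp N i : (i < N)%nat -> pp N (sp N i) = i.
Proof.
  intros H. destruct (Nat.lt_ge_cases (S i) N) as [H1|H1].
  - rewrite sp_small by lia. unfold pp.
    replace (S i + N - 1)%nat with (i + 1 * N)%nat by lia.
    rewrite Nat.Div0.mod_add. apply Nat.mod_small; lia.
  - replace i with (N - 1)%nat by lia. rewrite sp_last by lia. unfold pp.
    replace (0 + N - 1)%nat with (N - 1)%nat by lia. apply Nat.mod_small; lia.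
Qed.

Lemma sp_pp N i : (i < N)%nat -> sp N (pp N i) = i.
Proof.
  intros H. destruct i as [|i]; unfold pp.
  - replace (0 + N - 1)%nat with (N - 1)%nat by lia.
    rewrite Nat.mod_small by lia. apply sp_last; lia.
  - replace (S i + N - 1)%nat with (i + 1 * N)%nat by lia.
    rewrite Nat.Div0.mod_add, Nat.mod_small by lia. apply sp_small; lia.
Qed.

Lemma INR_sp N i : (i < N)%nat -> INR (sp N i) = INR i + 1 \/ INR (sp N i) = INR i + 1 - INR N.
Proof.
  intros H. destruct (Nat.lt_ge_cases (S i) N).
  - left. rewrite sp_small by auto. apply S_INR.
  - right. replace i with (N - 1)%nat by lia. rewrite sp_last by lia.
    rewrite minus_INR by lia. simpl. ring.
Qed.

Lemma rsum_sp N f : (0 < N)%nat -> rsum N (fun i => f (sp N i)) = rsum N f.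
Proof.
  intros H. destruct N as [|n]; [lia|].
  rewrite rsum_S, rsum_Sl.
  replace (sp (S n) n) with O
    by (symmetry; replace n with (S n - 1)%nat at 2 by lia; apply sp_last; lia).
  rewrite (rsum_ext n (fun i => f (sp (S n) i)) (fun i => f (S i))); [lra|].
  intros. rewrite sp_small by lia. reflexivity.
Qed.

Lemma rsum_pp_shift N (f : nat -> nat -> R) : (0 < N)%nat ->
  rsum N (fun i => f (pp N i) i) = rsum N (fun i => f i (sp N i)).
Proof.
  intros H. rewrite <- (rsum_sp N (fun i => f (pp N i) i)) by auto.
  apply rsum_ext. intros. rewrite pp_sp by auto. reflexivity.
Qed.

Lemma sum3_ext N f g :
  (forall i j k, (i < N)%nat -> (j < N)%nat -> (k < N)%nat -> f i j k = g i j k) ->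
  sum3 N f = sum3 N g.
Proof.
  intros H. unfold sum3. apply rsum_ext; intros. apply rsum_ext; intros.
  apply rsum_ext; intros. auto.
Qed.

Lemma sum3_plus N f g : sum3 N (fun i j k => f i j k + g i j k) = sum3 N f + sum3 N g.
Proof.
  unfold sum3. rewrite <- rsum_plus. apply rsum_ext; intros.
  rewrite <- rsum_plus. apply rsum_ext; intros. apply rsum_plus.
Qed.

Lemma sum3_minus N f g : sum3 N (fun i j k => f i j k - g i j k) = sum3 N f - sum3 N g.
Proof.
  unfold sum3. rewrite <- rsum_minus. apply rsum_ext; intros.
  rewrite <- rsum_minus. apply rsum_ext; intros. apply rsum_minus.
Qed.

Lemma sum3_scal N c f : sum3 N (fun i j k => c * f i j k) = c * sum3 N f.
Proof.
  unfold sum3. rewrite <- rsum_scal. apply rsum_ext; intros.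
  rewrite <- rsum_scal. apply rsum_ext; intros. apply rsum_scal.
Qed.

Lemma sum3_le N f g :
  (forall i j k, (i < N)%nat -> (j < N)%nat -> (k < N)%nat -> f i j k <= g i j k) ->
  sum3 N f <= sum3 N g.
Proof.
  intros H. unfold sum3. apply rsum_le; intros. apply rsum_le; intros.
  apply rsum_le; intros. auto.
Qed.

Lemma sum3_const N c : sum3 N (fun _ _ _ => c) = INR N ^ 3 * c.
Proof.
  unfold sum3. rewrite (rsum_ext N _ (fun _ => INR N * (INR N * c))).
  - rewrite rsum_const. ring.
  - intros. rewrite (rsum_ext N _ (fun _ => INR N * c)); intros; apply rsum_const.
Qed.

Lemma sum3_nonneg N f :
  (forall i j k, (i < N)%nat -> (j < N)%nat -> (k < N)%nat -> 0 <= f i j k) -> 0 <= sum3 N f.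
Proof.
  intros H. rewrite <- (Rmult_0_r (INR N ^ 3)), <- sum3_const. now apply sum3_le.
Qed.

Lemma sum3_abs N f : Rabs (sum3 N f) <= sum3 N (fun i j k => Rabs (f i j k)).
Proof.
  unfold sum3. eapply Rle_trans; [apply rsum_abs|]. apply rsum_le; intros i _.
  eapply Rle_trans; [apply rsum_abs|]. apply rsum_le; intros j _. apply rsum_abs.
Qed.

Lemma sum3_prod N (f g h : nat -> R) :
  sum3 N (fun a b c => f a * g b * h c) = rsum N f * rsum N g * rsum N h.
Proof.
  unfold sum3. rewrite (rsum_ext N _ (fun a => (rsum N g * rsum N h) * f a)).
  - rewrite rsum_scal. ring.
  - intros a _. rewrite (rsum_ext N _ (fun b => (f a * rsum N h) * g b)).
    + rewrite rsum_scal. ring.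
    + intros b _. transitivity (f a * g b * rsum N h); [|ring].
      rewrite <- rsum_scal. reflexivity.
Qed.

Lemma sum3_swap n m (F : nat -> nat -> nat -> nat -> nat -> nat -> R) :
  sum3 n (fun i j l => sum3 m (fun a b c => F i j l a b c)) =
  sum3 m (fun a b c => sum3 n (fun i j l => F i j l a b c)).
Proof.
  assert (swap3 : forall G : nat -> nat -> nat -> nat -> R,
    rsum n (fun i => rsum m (fun a => rsum m (fun b => rsum m (fun c => G i a b c)))) =
    rsum m (fun a => rsum m (fun b => rsum m (fun c => rsum n (fun i => G i a b c))))).
  { intros G. rewrite rsum_swap. apply rsum_ext; intros a _.
    rewrite rsum_swap. apply rsum_ext; intros b _. apply rsum_swap. }
  unfold sum3.
  rewrite (rsum_ext n _ (fun i => rsum n (fun j => rsum m (fun a => rsum m (fun b =>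
             rsum m (fun c => rsum n (fun l => F i j l a b c))))))).
  2: { intros i _. apply rsum_ext. intros j _. apply swap3. }
  rewrite (rsum_ext n _ (fun i => rsum m (fun a => rsum m (fun b => rsum m (fun c =>
             rsum n (fun j => rsum n (fun l => F i j l a b c))))))).
  2: { intros i _. apply (swap3 (fun j a b c => rsum n (fun l => F i j l a b c))). }
  apply (swap3 (fun i a b c => rsum n (fun j => rsum n (fun l => F i j l a b c)))).
Qed.

Lemma sum3_indicator N K (G : nat -> nat -> nat -> R) : (K < N)%nat ->
  sum3 N (fun a b c =>
    if (Nat.eqb a K && Nat.eqb b K && Nat.eqb c K)%bool then G a b c else 0) = G K K K.
Proof.
  intros HK. unfold sum3.
  rewrite (rsum_ext N _ (fun a => rsum N (fun b =>
             if (Nat.eqb a K && Nat.eqb b K)%bool then G a b K else 0))).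
  2: { intros a _. apply rsum_ext. intros b _. destruct (Nat.eqb a K && Nat.eqb b K)%bool.
       - apply (rsum_indicator N K (fun c => G a b c)); auto.
       - apply rsum_zero. }
  rewrite (rsum_ext N _ (fun a => if Nat.eqb a K then G a K K else 0)).
  2: { intros a _. destruct (Nat.eqb a K).
       - apply (rsum_indicator N K (fun b => G a b K)); auto.
       - apply rsum_zero. }
  apply (rsum_indicator N K (fun a => G a K K)); auto.
Qed.

Lemma sum3_pp_x N g m : (0 < N)%nat ->
  sum3 N (fun i j k => g (pp N i) j k * m i j k) = sum3 N (fun i j k => g i j k * m (sp N i) j k).
Proof.
  intros H. unfold sum3.
  apply (rsum_pp_shift N (fun a b => rsum N (fun j => rsum N (fun k => g a j k * m b j k)))); auto.
Qed.

Lemma sum3_pp_y N g m : (0 < N)%nat ->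
  sum3 N (fun i j k => g i (pp N j) k * m i j k) = sum3 N (fun i j k => g i j k * m i (sp N j) k).
Proof.
  intros H. unfold sum3. apply rsum_ext; intros i Hi.
  apply (rsum_pp_shift N (fun a b => rsum N (fun k => g i a k * m i b k))); auto.
Qed.

Lemma sum3_pp_z N g m : (0 < N)%nat ->
  sum3 N (fun i j k => g i j (pp N k) * m i j k) = sum3 N (fun i j k => g i j k * m i j (sp N k)).
Proof.
  intros H. unfold sum3. apply rsum_ext; intros i Hi. apply rsum_ext; intros j Hj.
  apply (rsum_pp_shift N (fun a b => g i j a * m i j b)); auto.
Qed.

Lemma sum3_divh_mul N h F mu : (0 < N)%nat -> h <> 0 ->
  sum3 N (fun i j k => divh N h F i j k * mu i j k) =
  - sum3 N (fun i j k => fx F i j k * Dx N h mu i j k + fy F i j k * Dy N h mu i j k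
                         + fz F i j k * Dz N h mu i j k).
Proof.
  intros HN Hh.
  transitivity (/h * (sum3 N (fun i j k => fx F i j k * mu i j k)
                     - sum3 N (fun i j k => fx F (pp N i) j k * mu i j k)
                     + sum3 N (fun i j k => fy F i j k * mu i j k)
                     - sum3 N (fun i j k => fy F i (pp N j) k * mu i j k)
                     + sum3 N (fun i j k => fz F i j k * mu i j k)
                     - sum3 N (fun i j k => fz F i j (pp N k) * mu i j k))).
  { repeat (rewrite <- sum3_minus || rewrite <- sum3_plus); rewrite <- sum3_scal.
    apply sum3_ext; intros. unfold divh. field. auto. }
  rewrite (sum3_pp_x N (fx F) mu), (sum3_pp_y N (fy F) mu), (sum3_pp_z N (fz F) mu) by auto.
  transitivity (- (/h * (sum3 N (fun i j k => fx F i j k * mu (sp N i) j k)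
                     - sum3 N (fun i j k => fx F i j k * mu i j k)
                     + sum3 N (fun i j k => fy F i j k * mu i (sp N j) k)
                     - sum3 N (fun i j k => fy F i j k * mu i j k)
                     + sum3 N (fun i j k => fz F i j k * mu i j (sp N k))
                     - sum3 N (fun i j k => fz F i j k * mu i j k)))); [ring|].
  f_equal.
  repeat (rewrite <- sum3_minus || rewrite <- sum3_plus); rewrite <- sum3_scal.
  apply sum3_ext; intros. unfold Dx, Dy, Dz. field. auto.
Qed.

Lemma ip_divh_l N h F mu : (0 < N)%nat -> h <> 0 ->
  ip N h (divh N h F) mu = - fip N h F (grad N h mu).
Proof.
  intros HN Hh. unfold ip, fip. rewrite sum3_divh_mul by auto. simpl. ring.
Qed.

Lemma lap_eq_divh_grad N h nu i j k :
  (i < N)%nat -> (j < N)%nat -> (k < N)%nat -> h <> 0 ->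
  lap N h nu i j k = divh N h (grad N h nu) i j k.
Proof.
  intros Hi Hj Hk Hh. unfold lap, divh, grad, Dx, Dy, Dz; simpl.
  rewrite !sp_pp by auto. field. auto.
Qed.

Lemma ln_le_sub1 x : 0 < x -> ln x <= x - 1.
Proof. intros Hx. pose proof (exp_ineq1_le (ln x)). rewrite exp_ln in H by auto. lra. Qed.

Lemma xlnx_convex u v : 0 < u -> 0 < v -> u * ln u - v * ln v <= (ln u + 1) * (u - v).
Proof.
  intros Hu Hv.
  assert (H1 : ln (u / v) <= u / v - 1) by (apply ln_le_sub1, Rdiv_lt_0_compat; auto).
  unfold Rdiv in H1. rewrite ln_mult, ln_Rinv in H1 by (auto; apply Rinv_0_lt_compat; auto).
  assert (H2 : v * (ln u - ln v) <= v * (u * / v - 1)) by (apply Rmult_le_compat_l; lra).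
  replace (v * (u * / v - 1)) with (u - v) in H2 by (field; lra).
  nra.
Qed.

Lemma xlnx_ge u : 0 < u -> u - 1 <= u * ln u.
Proof.
  intros Hu. pose proof (ln_le_sub1 (/ u) ltac:(apply Rinv_0_lt_compat; auto)) as H.
  rewrite ln_Rinv in H by auto.
  assert (u * - ln u <= u * (/ u - 1)) by (apply Rmult_le_compat_l; lra).
  replace (u * (/ u - 1)) with (1 - u) in H0 by (field; lra). lra.
Qed.

Lemma xlnx_le u : 0 < u < 2 -> u * ln u <= 2.
Proof.
  intros Hu. pose proof (ln_le_sub1 u ltac:(lra)).
  assert (u * ln u <= u * (u - 1)) by (apply Rmult_le_compat_l; lra). nra.
Qed.

Definition entropy (a : R) := (1 + a) * ln (1 + a) + (1 - a) * ln (1 - a).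

Lemma entropy_convex a b : -1 < a < 1 -> -1 < b < 1 ->
  entropy a <= entropy b + (a - b) * (ln (1 + a) - ln (1 - a)).
Proof.
  intros Ha Hb. unfold entropy.
  pose proof (xlnx_convex (1 + a) (1 + b) ltac:(lra) ltac:(lra)).
  pose proof (xlnx_convex (1 - a) (1 - b) ltac:(lra) ltac:(lra)).
  nra.
Qed.

Lemma entropy_bounds a : -1 < a < 1 -> 0 <= entropy a <= 4.
Proof.
  intros Ha. unfold entropy.
  pose proof (xlnx_ge (1 + a) ltac:(lra)). pose proof (xlnx_ge (1 - a) ltac:(lra)).
  pose proof (xlnx_le (1 + a) ltac:(lra)). pose proof (xlnx_le (1 - a) ltac:(lra)). lra.
Qed.

Definition grad_dot N h (a b : gf) i j k :=
  Dx N h a i j k * Dx N h b i j k + Dy N h a i j k * Dy N h b i j k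
  + Dz N h a i j k * Dz N h b i j k.

Definition energy_density N h eps theta (a : gf) i j k :=
  entropy (a i j k) + eps ^ 2 / 2 * grad_dot N h a a i j k - theta / 2 * (a i j k * a i j k).

Lemma Eh_sum3 N h eps theta a :
  Eh N h eps theta a = h ^ 3 * sum3 N (energy_density N h eps theta a).
Proof.
  unfold Eh, energy_density, entropy, norm2sq, gradnorm2sq, ip, fip, grad_dot.
  rewrite !sum3_minus, !sum3_plus, !sum3_scal, !sum3_plus. simpl. ring.
Qed.

Lemma gradnorm2sq_sum3 N h a : gradnorm2sq N h a = h ^ 3 * sum3 N (grad_dot N h a a).
Proof. reflexivity. Qed.

Lemma energy_density_sub_le N h eps theta (a b : gf) i j k : h <> 0 -> 0 <= theta ->
  -1 < a i j k < 1 -> -1 < b i j k < 1 ->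
  let d := fun i j k => a i j k - b i j k in
  energy_density N h eps theta a i j k - energy_density N h eps theta b i j k
  <= d i j k * (ln (1 + a i j k) - ln (1 - a i j k)) - theta * (d i j k * b i j k)
     + eps ^ 2 * grad_dot N h a d i j k.
Proof.
  intros Hh Hth Ha Hb d.
  pose proof (entropy_convex _ _ Ha Hb) as Hent.
  unfold energy_density, grad_dot, d, Dx, Dy, Dz.
  set (x1 := (a (sp N i) j k - a i j k) / h). set (x2 := (b (sp N i) j k - b i j k) / h).
  set (y1 := (a i (sp N j) k - a i j k) / h). set (y2 := (b i (sp N j) k - b i j k) / h).
  set (z1 := (a i j (sp N k) - a i j k) / h). set (z2 := (b i j (sp N k) - b i j k) / h).
  replace ((a (sp N i) j k - b (sp N i) j k - (a i j k - b i j k)) / h) with (x1 - x2)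
    by (unfold x1, x2; field; auto).
  replace ((a i (sp N j) k - b i (sp N j) k - (a i j k - b i j k)) / h) with (y1 - y2)
    by (unfold y1, y2; field; auto).
  replace ((a i j (sp N k) - b i j (sp N k) - (a i j k - b i j k)) / h) with (z1 - z2)
    by (unfold z1, z2; field; auto).
  assert (Hgrad : 0 <= eps ^ 2 * ((x1 - x2) ^ 2 + (y1 - y2) ^ 2 + (z1 - z2) ^ 2))
    by (apply Rmult_le_pos; [apply pow2_ge_0|];
        pose proof (pow2_ge_0 (x1 - x2)); pose proof (pow2_ge_0 (y1 - y2));
        pose proof (pow2_ge_0 (z1 - z2)); lra).
  assert (Hquad : 0 <= theta * (a i j k - b i j k) ^ 2)
    by (apply Rmult_le_pos; [lra|apply pow2_ge_0]).
  nra.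
Qed.

Lemma Eh_convex_splitting N h eps theta (a b mu : gf) :
  (0 < N)%nat -> 0 < h -> 0 <= theta ->
  (forall i j k, (i < N)%nat -> (j < N)%nat -> (k < N)%nat ->
     -1 < a i j k < 1 /\ -1 < b i j k < 1) ->
  (forall i j k, (i < N)%nat -> (j < N)%nat -> (k < N)%nat ->
     mu i j k = ln (1 + a i j k) - ln (1 - a i j k) - theta * b i j k
                - eps ^ 2 * lap N h a i j k) ->
  Eh N h eps theta a - Eh N h eps theta b <= ip N h (fun i j k => a i j k - b i j k) mu.
Proof.
  intros HN Hh Hth Hab Hmu.
  set (d := fun i j k => a i j k - b i j k).
  assert (Hlap : sum3 N (fun i j k => d i j k * lap N h a i j k) = - sum3 N (grad_dot N h a d)).
  { rewrite (sum3_ext N _ (fun i j k => divh N h (grad N h a) i j k * d i j k)).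
    - rewrite sum3_divh_mul by (auto; lra). reflexivity.
    - intros. rewrite lap_eq_divh_grad by (auto; lra). ring. }
  assert (Hip : ip N h d mu = h ^ 3 * sum3 N (fun i j k =>
      d i j k * (ln (1 + a i j k) - ln (1 - a i j k)) - theta * (d i j k * b i j k)
      + eps ^ 2 * grad_dot N h a d i j k)).
  { unfold ip. f_equal.
    transitivity (sum3 N (fun i j k => d i j k * (ln (1 + a i j k) - ln (1 - a i j k))
                                       - theta * (d i j k * b i j k))
                  - eps ^ 2 * sum3 N (fun i j k => d i j k * lap N h a i j k)).
    - rewrite <- sum3_scal, <- sum3_minus. apply sum3_ext; intros i j k Hi Hj Hk.
      rewrite Hmu by auto. ring.
    - rewrite Hlap, sum3_plus, sum3_scal. ring. }
  rewrite Hip, !Eh_sum3, <- Rmult_minus_distr_l, <- sum3_minus.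
  apply Rmult_le_compat_l; [left; apply pow_lt; auto|].
  apply sum3_le; intros i j k Hi Hj Hk. destruct (Hab i j k Hi Hj Hk) as [Ha Hb].
  apply energy_density_sub_le; auto; lra.
Qed.

Lemma Eh_step N h eps theta dt (a b mu : gf) F :
  (0 < N)%nat -> 0 < h -> 0 < dt -> 0 <= theta ->
  (forall i j k, (i < N)%nat -> (j < N)%nat -> (k < N)%nat ->
     -1 < a i j k < 1 /\ -1 < b i j k < 1) ->
  (forall i j k, (i < N)%nat -> (j < N)%nat -> (k < N)%nat ->
     (a i j k - b i j k) / dt = divh N h F i j k /\
     mu i j k = ln (1 + a i j k) - ln (1 - a i j k) - theta * b i j k
                - eps ^ 2 * lap N h a i j k) ->
  Eh N h eps theta a + dt * fip N h F (grad N h mu) <= Eh N h eps theta b.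
Proof.
  intros HN Hh Hdt Hth Hab Hs.
  assert (Hsplit := Eh_convex_splitting N h eps theta a b mu HN Hh Hth Hab
                      ltac:(intros; apply Hs; auto)).
  assert (Hdiss : ip N h (fun i j k => a i j k - b i j k) mu = - dt * fip N h F (grad N h mu)).
  { transitivity (dt * ip N h (divh N h F) mu).
    - unfold ip. rewrite <- Rmult_assoc, (Rmult_comm dt), Rmult_assoc. f_equal.
      rewrite <- sum3_scal.
      apply sum3_ext; intros i j k Hi Hj Hk. destruct (Hs i j k Hi Hj Hk) as [Hq _].
      rewrite <- Hq. field. lra.
    - rewrite ip_divh_l by (auto; lra). ring. }
  lra.
Qed.

Lemma fip_mobility_nonneg N h M M0 (b mu : gf) : (0 < N)%nat -> 0 < h -> 0 < M0 ->
  (forall x, -1 <= x <= 1 -> M0 <= M x) ->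
  (forall i j k, (i < N)%nat -> (j < N)%nat -> (k < N)%nat -> -1 < b i j k < 1) ->
  0 <= fip N h (fmul (mobface N M b) (grad N h mu)) (grad N h mu).
Proof.
  intros HN Hh HM0 HM Hb. unfold fip.
  apply Rmult_le_pos; [left; apply pow_lt; auto|].
  apply sum3_nonneg; intros i j k Hi Hj Hk. simpl.
  assert (Hface : forall c, -1 < c < 1 -> forall x, 0 <= M ((c + b i j k) / 2) * x * x).
  { intros c Hc x. pose proof (Hb i j k Hi Hj Hk).
    pose proof (HM ((c + b i j k) / 2) ltac:(split; lra)).
    rewrite Rmult_assoc. apply Rmult_le_pos; nra. }
  pose proof (Hface _ (Hb (sp N i) j k (sp_lt N i HN) Hj Hk) (Dx N h mu i j k)).
  pose proof (Hface _ (Hb i (sp N j) k Hi (sp_lt N j HN) Hk) (Dy N h mu i j k)).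
  pose proof (Hface _ (Hb i j (sp N k) Hi Hj (sp_lt N k HN)) (Dz N h mu i j k)).
  lra.
Qed.

Lemma grid_volume L N : (0 < N)%nat -> (L / INR N) ^ 3 * INR N ^ 3 = L ^ 3.
Proof. intros. assert (0 < INR N) by (apply lt_0_INR; auto). field. lra. Qed.

Lemma Eh_ge N h eps theta a : 0 < h -> 0 <= theta ->
  (forall i j k, (i < N)%nat -> (j < N)%nat -> (k < N)%nat -> -1 < a i j k < 1) ->
  eps ^ 2 / 2 * gradnorm2sq N h a - theta / 2 * (h ^ 3 * INR N ^ 3) <= Eh N h eps theta a.
Proof.
  intros Hh Hth Ha.
  rewrite Eh_sum3, gradnorm2sq_sum3.
  replace (eps ^ 2 / 2 * (h ^ 3 * sum3 N (grad_dot N h a a)) - theta / 2 * (h ^ 3 * INR N ^ 3))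
    with (h ^ 3 * (eps ^ 2 / 2 * sum3 N (grad_dot N h a a) - theta / 2 * (INR N ^ 3 * 1)))
    by ring.
  apply Rmult_le_compat_l; [left; apply pow_lt; auto|].
  rewrite <- sum3_const, <- !sum3_scal, <- sum3_minus.
  apply sum3_le; intros i j k Hi Hj Hk. specialize (Ha i j k Hi Hj Hk).
  unfold energy_density. pose proof (entropy_bounds _ Ha).
  assert (a i j k * a i j k <= 1) by nra. nra.
Qed.

Lemma Eh_le N h eps theta a : 0 < h -> 0 <= theta ->
  (forall i j k, (i < N)%nat -> (j < N)%nat -> (k < N)%nat -> -1 < a i j k < 1) ->
  Eh N h eps theta a <= h ^ 3 * INR N ^ 3 * 4 + eps ^ 2 / 2 * gradnorm2sq N h a.
Proof.
  intros Hh Hth Ha.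
  rewrite Eh_sum3, gradnorm2sq_sum3.
  replace (h ^ 3 * INR N ^ 3 * 4 + eps ^ 2 / 2 * (h ^ 3 * sum3 N (grad_dot N h a a)))
    with (h ^ 3 * (INR N ^ 3 * 4 + eps ^ 2 / 2 * sum3 N (grad_dot N h a a))) by ring.
  apply Rmult_le_compat_l; [left; apply pow_lt; auto|].
  rewrite <- sum3_const, <- sum3_scal, <- sum3_plus.
  apply sum3_le; intros i j k Hi Hj Hk. specialize (Ha i j k Hi Hj Hk).
  unfold energy_density. pose proof (entropy_bounds _ Ha).
  assert (0 <= a i j k * a i j k) by nra. nra.
Qed.

Lemma gradnorm2sq_le N h a D : 0 < h ->
  (forall i j k, (i < N)%nat -> (j < N)%nat -> (k < N)%nat ->
     Rabs (Dx N h a i j k) <= D /\ Rabs (Dy N h a i j k) <= D /\ Rabs (Dz N h a i j k) <= D) ->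
  gradnorm2sq N h a <= h ^ 3 * INR N ^ 3 * (3 * D ^ 2).
Proof.
  intros Hh HD. rewrite gradnorm2sq_sum3, Rmult_assoc, <- sum3_const.
  apply Rmult_le_compat_l; [left; apply pow_lt; auto|].
  apply sum3_le; intros i j k Hi Hj Hk. unfold grad_dot.
  destruct (HD i j k Hi Hj Hk) as (A1 & A2 & A3).
  assert (Hsq : forall x, Rabs x <= D -> x * x <= D ^ 2)
    by (intros x Hx; unfold Rabs in Hx; destruct Rcase_abs; nra).
  pose proof (Hsq _ A1); pose proof (Hsq _ A2); pose proof (Hsq _ A3). lra.
Qed.

Definition uncurry3 (f : fun3) : R * R * R -> R :=
  fun p => f (fst (fst p)) (snd (fst p)) (snd p).

Lemma cont3_ext f g : (forall x y z, f x y z = g x y z) -> cont3 f -> cont3 g.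
Proof.
  intros H Hf x y z. apply (continuous_ext (uncurry3 f)); [intros [[a b] c]; apply H|apply Hf].
Qed.

Lemma cont3_plus f g : cont3 f -> cont3 g -> cont3 (fun x y z => f x y z + g x y z).
Proof.
  intros Hf Hg x y z. apply (continuous_plus (uncurry3 f) (uncurry3 g)); [apply Hf|apply Hg].
Qed.

Lemma cont3_mult f g : cont3 f -> cont3 g -> cont3 (fun x y z => f x y z * g x y z).
Proof.
  intros Hf Hg x y z. apply (continuous_mult (uncurry3 f) (uncurry3 g)); [apply Hf|apply Hg].
Qed.

Lemma cont3_const c : cont3 (fun _ _ _ => c).
Proof. intros x y z. apply continuous_const. Qed.

Lemma cont3_scal c f : cont3 f -> cont3 (fun x y z => c * f x y z).
Proof. intros Hf. apply (cont3_mult (fun _ _ _ => c)); [apply cont3_const|auto]. Qed.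

Lemma cont3_comp (g : R -> R) f :
  (forall t, continuous g t) -> cont3 f -> cont3 (fun x y z => g (f x y z)).
Proof. intros Hg Hf x y z. apply (continuous_comp (uncurry3 f) g); [apply Hf|apply Hg]. Qed.

Lemma cont3_abs f : cont3 f -> cont3 (fun x y z => Rabs (f x y z)).
Proof. intros Hf. apply cont3_comp; auto. exact continuous_Rabs. Qed.

Lemma cont3_linear a b c : cont3 (fun x y z => a * x + b * y + c * z).
Proof.
  assert (Hx : cont3 (fun x _ _ => x)).
  { intros x y z. apply (continuous_comp (fun p : R * R * R => fst p) fst); apply continuous_fst. }
  assert (Hy : cont3 (fun _ y _ => y)).
  { intros x y z. apply (continuous_comp (fun p : R * R * R => fst p) snd);
      [apply continuous_fst|apply continuous_snd]. }
  assert (Hz : cont3 (fun _ _ z => z)) by (intros x y z; apply continuous_snd).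
  apply (cont3_plus (fun x y z => a * x + b * y)); [apply cont3_plus|]; apply cont3_scal; auto.
Qed.

Lemma cont3_eps_delta f : cont3 f -> forall x y z (eps : posreal), exists d : posreal,
  forall x' y' z', Rabs (x' - x) < d -> Rabs (y' - y) < d -> Rabs (z' - z) < d ->
  Rabs (f x' y' z' - f x y z) < eps.
Proof.
  intros Hf x y z eps.
  destruct (proj1 (filterlim_locally _ _) (Hf x y z) eps) as [d Hd].
  exists d. intros x' y' z' H1 H2 H3. apply (Hd (x', y', z')). split; [split|]; simpl; auto.
Qed.

Lemma continuous_of_eps_delta (g : R -> R) t :
  (forall eps : posreal, exists d : posreal,
     forall t', Rabs (t' - t) < d -> Rabs (g t' - g t) < eps) ->
  continuous g t.
Proof.
  intros H. apply filterlim_locally. intros eps. destruct (H eps) as [d Hd].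
  exists d. intros y Hy. apply Hd. exact Hy.
Qed.

Lemma cont3_slice_z f x y z : cont3 f -> continuous (fun t => f x y t) z.
Proof.
  intros Hf. apply continuous_of_eps_delta. intros eps.
  destruct (cont3_eps_delta f Hf x y z eps) as [d Hd].
  exists d. intros t' Ht'. apply Hd; auto; rewrite Rminus_diag, Rabs_R0; apply cond_pos.
Qed.

Definition cont2 (g : R -> R -> R) := forall x y, continuity_2d_pt g x y.

Lemma cont3_slice_yz f x : cont3 f -> cont2 (fun y z => f x y z).
Proof.
  intros Hf y z eps. destruct (cont3_eps_delta f Hf x y z eps) as [d Hd].
  exists d. intros u v Hu Hv. apply Hd; auto. rewrite Rminus_diag, Rabs_R0; apply cond_pos.
Qed.

Lemma cont3_slice_xz f y : cont3 f -> cont2 (fun x z => f x y z).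
Proof.
  intros Hf x z eps. destruct (cont3_eps_delta f Hf x y z eps) as [d Hd].
  exists d. intros u v Hu Hv. apply Hd; auto. rewrite Rminus_diag, Rabs_R0; apply cond_pos.
Qed.

Lemma cont2_slice_y g x y : cont2 g -> continuous (fun t => g x t) y.
Proof.
  intros Hg. apply continuous_of_eps_delta. intros eps. destruct (Hg x y eps) as [d Hd].
  exists d. intros t' Ht'. apply Hd; auto. rewrite Rminus_diag, Rabs_R0; apply cond_pos.
Qed.

Lemma ex_RInt_continuous_R (g : R -> R) a b : (forall t, continuous g t) -> ex_RInt g a b.
Proof. intros H. apply (ex_RInt_continuous (V := R_CompleteNormedModule)). intros; apply H. Qed.

(* The pointwise moduli of continuity along [a <= z <= b] are made uniform by a
   Lebesgue-number argument ([compactness_value_1d]). *)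
Lemma cont3_uniform_z f a b : cont3 f -> forall x y (eps : posreal), exists d : posreal,
  forall x' y' z, Rabs (x' - x) < d -> Rabs (y' - y) < d -> a <= z <= b ->
  Rabs (f x' y' z - f x y z) < eps.
Proof.
  intros Hf x y eps.
  assert (He2 : 0 < eps / 2) by (pose proof (cond_pos eps); lra).
  set (del := fun t => proj1_sig (constructive_indefinite_description _
                         (cont3_eps_delta f Hf x y t (mkposreal _ He2)))).
  assert (Hdel : forall t x' y' z', Rabs (x' - x) < del t -> Rabs (y' - y) < del t ->
                   Rabs (z' - t) < del t -> Rabs (f x' y' z' - f x y t) < eps / 2).
  { intros t. unfold del. destruct (constructive_indefinite_description _ _) as [d Hd].
    simpl. apply Hd. }
  assert (Hp : forall t, 0 < del t / 2) by (intros; pose proof (cond_pos (del t)); lra).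
  destruct (compactness_value_1d a b (fun t => mkposreal _ (Hp t))) as [d Hd].
  exists d. intros x' y' z Hx Hy Hz.
  specialize (Hd z Hz). apply NNPP in Hd. destruct Hd as [t [Ht [Hzt Hdt]]]. simpl in Hzt, Hdt.
  pose proof (cond_pos (del t)).
  assert (A1 : Rabs (f x' y' z - f x y t) < eps / 2) by (apply Hdel; lra).
  assert (A2 : Rabs (f x y z - f x y t) < eps / 2)
    by (apply Hdel; rewrite ?Rminus_diag, ?Rabs_R0; lra).
  replace (f x' y' z - f x y z) with ((f x' y' z - f x y t) - (f x y z - f x y t)) by ring.
  eapply Rle_lt_trans; [apply Rabs_triang|]. rewrite Rabs_Ropp. lra.
Qed.

Lemma RInt_0 a b : RInt (fun _ => 0) a b = 0.
Proof. rewrite RInt_const. apply Rmult_0_r. Qed.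

Lemma RInt_derive_continuous (F F' : R -> R) a b :
  (forall t, is_derive F t (F' t)) -> (forall t, continuous F' t) ->
  RInt F' a b = F b - F a.
Proof.
  intros H1 H2. apply is_RInt_unique.
  apply (is_RInt_derive (V := R_CompleteNormedModule) F F'); intros; auto.
Qed.

Section Omega.
Variable L : R.
Hypothesis HL : 0 < L.

Lemma ex_RInt_z f x y : cont3 f -> ex_RInt (fun z => f x y z) 0 L.
Proof. intros Hf. apply ex_RInt_continuous_R. intros; apply cont3_slice_z; auto. Qed.

Lemma RInt_difference_le (g1 g2 : R -> R) (eps : posreal) :
  ex_RInt g1 0 L -> ex_RInt g2 0 L ->
  (forall t, 0 <= t <= L -> Rabs (g1 t - g2 t) < eps / (L + 1)) ->
  Rabs (RInt g1 0 L - RInt g2 0 L) < eps.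
Proof.
  intros H1 H2 H.
  replace (RInt g1 0 L - RInt g2 0 L) with (RInt (fun t => g1 t - g2 t) 0 L)
    by (apply (RInt_minus g1 g2); auto).
  eapply Rle_lt_trans.
  - apply (abs_RInt_le_const _ 0 L (eps / (L + 1))); [lra| |].
    + apply (ex_RInt_minus (V := R_NormedModule)); auto.
    + intros t Ht. left. apply H; auto.
  - pose proof (cond_pos eps).
    replace ((L - 0) * (eps / (L + 1))) with (eps - eps / (L + 1)) by (field; lra).
    assert (0 < eps / (L + 1)) by (apply Rdiv_lt_0_compat; lra). lra.
Qed.

Lemma cont2_RInt_z f : cont3 f -> cont2 (fun x y => RInt (fun z => f x y z) 0 L).
Proof.
  intros Hf x y eps.
  assert (He : 0 < eps / (L + 1)) by (apply Rdiv_lt_0_compat; [apply cond_pos|lra]).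
  destruct (cont3_uniform_z f 0 L Hf x y (mkposreal _ He)) as [d Hd]. simpl in Hd.
  exists d. intros u v Hu Hv.
  apply RInt_difference_le; try (apply ex_RInt_z; auto). intros t Ht. apply Hd; auto.
Qed.

Lemma ex_RInt_y g x : cont2 g -> ex_RInt (fun y => g x y) 0 L.
Proof. intros Hg. apply ex_RInt_continuous_R. intros; apply cont2_slice_y; auto. Qed.

Lemma continuous_RInt_y g c : cont2 g -> continuous (fun x => RInt (fun y => g x y) 0 L) c.
Proof.
  intros Hg. apply continuous_of_eps_delta. intros eps.
  assert (He : 0 < eps / (L + 1)) by (apply Rdiv_lt_0_compat; [apply cond_pos|lra]).
  destruct (uniform_continuity_2d_1d' g 0 L c ltac:(intros; apply Hg) (mkposreal _ He))
    as [d Hd].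
  simpl in Hd. exists d. intros t' Ht'.
  apply RInt_difference_le; try (apply ex_RInt_y; auto). intros t Ht.
  pose proof (cond_pos d). pose proof (proj1 (Rabs_lt_between' _ _ _) Ht').
  apply Hd; try lra. rewrite Rminus_diag, Rabs_R0. lra.
Qed.

Lemma ex_RInt_yz f x : cont3 f -> ex_RInt (fun y => RInt (fun z => f x y z) 0 L) 0 L.
Proof. intros Hf. exact (ex_RInt_y _ x (cont2_RInt_z f Hf)). Qed.

Lemma continuous_RInt_yz f c : cont3 f ->
  continuous (fun x => RInt (fun y => RInt (fun z => f x y z) 0 L) 0 L) c.
Proof. intros Hf. exact (continuous_RInt_y _ c (cont2_RInt_z f Hf)). Qed.

Lemma continuous_RInt_z f x y : cont3 f -> continuous (fun t => RInt (fun z => f x t z) 0 L) y.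
Proof. intros Hf. exact (cont2_slice_y _ x y (cont2_RInt_z f Hf)). Qed.

Lemma ex_RInt_xyz f : cont3 f ->
  ex_RInt (fun x => RInt (fun y => RInt (fun z => f x y z) 0 L) 0 L) 0 L.
Proof. intros Hf. apply ex_RInt_continuous_R. intros; apply continuous_RInt_yz; auto. Qed.

Lemma intOmega_ext f g : (forall x y z, f x y z = g x y z) -> intOmega L f = intOmega L g.
Proof.
  intros H. unfold intOmega.
  apply RInt_ext; intros. apply RInt_ext; intros. apply RInt_ext; intros. auto.
Qed.

Lemma intOmega_linear (op : R -> R -> R) f g :
  (forall (u v : R -> R), ex_RInt u 0 L -> ex_RInt v 0 L ->
      RInt (fun t => op (u t) (v t)) 0 L = op (RInt u 0 L) (RInt v 0 L)) ->
  cont3 f -> cont3 g ->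
  intOmega L (fun x y z => op (f x y z) (g x y z)) = op (intOmega L f) (intOmega L g).
Proof.
  intros Hop Hf Hg. unfold intOmega.
  rewrite <- (Hop (fun x => RInt (fun y => RInt (fun z => f x y z) 0 L) 0 L)
                  (fun x => RInt (fun y => RInt (fun z => g x y z) 0 L) 0 L))
    by (apply ex_RInt_xyz; auto).
  apply RInt_ext; intros x _.
  rewrite <- (Hop (fun y => RInt (fun z => f x y z) 0 L) (fun y => RInt (fun z => g x y z) 0 L))
    by (apply ex_RInt_yz; auto).
  apply RInt_ext; intros y _.
  apply (Hop (fun z => f x y z) (fun z => g x y z)); apply ex_RInt_z; auto.
Qed.

Lemma intOmega_plus f g : cont3 f -> cont3 g ->
  intOmega L (fun x y z => f x y z + g x y z) = intOmega L f + intOmega L g.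
Proof.
  intros. apply (intOmega_linear Rplus); auto.
  intros u v Hu Hv; apply (RInt_plus u v); auto.
Qed.

Lemma intOmega_scal c f : cont3 f ->
  intOmega L (fun x y z => c * f x y z) = c * intOmega L f.
Proof.
  intros. apply (intOmega_linear (fun _ b => c * b) f f); auto.
  intros u v Hu Hv; apply (RInt_scal v); auto.
Qed.

Lemma intOmega_le f g : cont3 f -> cont3 g -> (forall x y z, f x y z <= g x y z) ->
  intOmega L f <= intOmega L g.
Proof.
  intros Hf Hg H. unfold intOmega.
  apply RInt_le; [lra|apply ex_RInt_xyz; auto|apply ex_RInt_xyz; auto|]. intros x _.
  apply RInt_le; [lra|apply ex_RInt_yz; auto|apply ex_RInt_yz; auto|]. intros y _.
  apply RInt_le; [lra|apply ex_RInt_z; auto|apply ex_RInt_z; auto|]. intros z _. auto.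
Qed.

Lemma intOmega_abs f : cont3 f ->
  Rabs (intOmega L f) <= intOmega L (fun x y z => Rabs (f x y z)).
Proof.
  intros Hf. assert (Ha := cont3_abs f Hf). unfold intOmega.
  eapply Rle_trans; [apply abs_RInt_le; [lra|apply ex_RInt_xyz; auto]|].
  apply RInt_le; [lra| |apply (ex_RInt_xyz (fun x y z => Rabs (f x y z))); auto|].
  { apply ex_RInt_continuous_R. intros.
    apply continuous_Rabs_comp, continuous_RInt_yz; auto. }
  intros x _.
  eapply Rle_trans; [apply abs_RInt_le; [lra|apply ex_RInt_yz; auto]|].
  apply RInt_le; [lra| |apply (ex_RInt_yz (fun x y z => Rabs (f x y z))); auto|].
  { apply ex_RInt_continuous_R. intros.
    apply continuous_Rabs_comp, continuous_RInt_z; auto. }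
  intros y _. apply abs_RInt_le; [lra|apply (ex_RInt_z f); auto].
Qed.

Lemma intOmega_const c : intOmega L (fun _ _ _ => c) = L ^ 3 * c.
Proof.
  unfold intOmega. rewrite !RInt_const. simpl. unfold scal; simpl. unfold mult; simpl. ring.
Qed.

Lemma intOmega_abs_nonneg g : cont3 g -> 0 <= intOmega L (fun x y z => Rabs (g x y z)).
Proof.
  intros Hg. replace 0 with (intOmega L (fun _ _ _ => 0)) by (rewrite intOmega_const; ring).
  apply intOmega_le; [apply cont3_const|apply cont3_abs; auto|]. intros; apply Rabs_pos.
Qed.

Lemma is_derive_RInt_slice (f f' : R -> R -> R) y :
  (forall u t, is_derive (fun w => f w t) u (f' u t)) ->
  cont2 f' -> (forall u, ex_RInt (fun t => f u t) 0 L) ->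
  is_derive (fun u => RInt (fun t => f u t) 0 L) y (RInt (fun t => f' y t) 0 L).
Proof.
  intros Hd Hc He.
  assert (HD : forall u t, Derive (fun w => f w t) u = f' u t)
    by (intros; apply is_derive_unique; auto).
  replace (RInt (fun t => f' y t) 0 L) with (RInt (fun t => Derive (fun u => f u t) y) 0 L)
    by (apply RInt_ext; intros; auto).
  apply (is_derive_RInt_param f 0 L y).
  - apply filter_forall. intros u t _. eexists. apply Hd.
  - intros t _. apply (continuity_2d_pt_ext f'); [intros; rewrite HD; auto|apply Hc].
  - apply filter_forall. intros u. apply He.
Qed.

Lemma intOmega_derive_z_periodic (F F' : fun3) : cont3 F' ->
  (forall x y z, is_derive (fun t => F x y t) z (F' x y z)) ->
  (forall x y, F x y L = F x y 0) -> intOmega L F' = 0.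
Proof.
  intros Hc Hd Hp. unfold intOmega.
  transitivity (RInt (fun _ => 0) 0 L); [|apply RInt_0]. apply RInt_ext; intros x _.
  transitivity (RInt (fun _ => 0) 0 L); [|apply RInt_0]. apply RInt_ext; intros y _.
  rewrite (RInt_derive_continuous (fun t => F x y t) (fun t => F' x y t)).
  - rewrite Hp. apply Rminus_diag_eq. reflexivity.
  - intros; apply Hd.
  - intros; apply cont3_slice_z; auto.
Qed.

Lemma intOmega_derive_y_periodic (F F' : fun3) : cont3 F -> cont3 F' ->
  (forall x y z, is_derive (fun t => F x t z) y (F' x y z)) ->
  (forall x z, F x L z = F x 0 z) -> intOmega L F' = 0.
Proof.
  intros Hc0 Hc Hd Hp. unfold intOmega.
  transitivity (RInt (fun _ => 0) 0 L); [|apply RInt_0]. apply RInt_ext; intros x _.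
  rewrite (RInt_derive_continuous (fun y => RInt (fun z => F x y z) 0 L)
                                  (fun y => RInt (fun z => F' x y z) 0 L)).
  - rewrite (RInt_ext (fun z => F x L z) (fun z => F x 0 z)) by (intros; apply Hp).
    apply Rminus_diag_eq. reflexivity.
  - intros y. apply (is_derive_RInt_slice (fun u t => F x u t) (fun u t => F' x u t)); auto.
    + apply (cont3_slice_yz F'); auto.
    + intros; apply (ex_RInt_z F); auto.
  - intros y. apply continuous_RInt_z; auto.
Qed.

Lemma intOmega_derive_x_periodic (F F' : fun3) : cont3 F -> cont3 F' ->
  (forall x y z, is_derive (fun t => F t y z) x (F' x y z)) ->
  (forall y z, F L y z = F 0 y z) -> intOmega L F' = 0.
Proof.
  intros Hc0 Hc Hd Hp. unfold intOmega.
  rewrite (RInt_derive_continuous (fun x => RInt (fun y => RInt (fun z => F x y z) 0 L) 0 L)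
                                  (fun x => RInt (fun y => RInt (fun z => F' x y z) 0 L) 0 L)).
  - rewrite (RInt_ext (fun y => RInt (fun z => F L y z) 0 L) (fun y => RInt (fun z => F 0 y z) 0 L))
      by (intros; apply RInt_ext; intros; apply Hp).
    apply Rminus_diag_eq. reflexivity.
  - intros x. apply (is_derive_RInt_slice (fun w t => RInt (fun z => F w t z) 0 L)
                                          (fun w t => RInt (fun z => F' w t z) 0 L)).
    + intros u y. apply (is_derive_RInt_slice (fun w t => F w y t) (fun w t => F' w y t)).
      * intros; apply Hd.
      * apply (cont3_slice_xz F'); auto.
      * intros; apply (ex_RInt_z F); auto.
    + apply (cont2_RInt_z F'); auto.
    + intros; apply (ex_RInt_yz F); auto.
  - intros x. apply continuous_RInt_yz; auto.
Qed.

End Omega.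

Lemma Ck_cont n f : Ck n f -> cont3 f.
Proof. destruct n; simpl; tauto. Qed.

Lemma Ck_pdx n f : Ck (S n) f -> Ck n (pdx f).
Proof. simpl; tauto. Qed.
Lemma Ck_pdy n f : Ck (S n) f -> Ck n (pdy f).
Proof. simpl; tauto. Qed.
Lemma Ck_pdz n f : Ck (S n) f -> Ck n (pdz f).
Proof. simpl; tauto. Qed.

Lemma Ck_S_Ck n f : Ck (S n) f -> Ck n f.
Proof.
  revert f; induction n as [|n IH]; intros f Hf; [simpl in *; tauto|].
  destruct Hf as (Hc & Hd & Hx & Hy & Hz).
  exact (conj Hc (conj Hd (conj (IH _ Hx) (conj (IH _ Hy) (IH _ Hz))))).
Qed.

Lemma Ck_le m n f : (m <= n)%nat -> Ck n f -> Ck m f.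
Proof.
  intros Hmn. induction Hmn as [|n _ IH]; auto. intros Hf. apply IH, Ck_S_Ck, Hf.
Qed.

Lemma Ck_iter (d : fun3 -> fun3) : (forall n f, Ck (S n) f -> Ck n (d f)) ->
  forall m n f, Ck (m + n) f -> Ck m (Nat.iter n d f).
Proof.
  intros Hd m n. revert m. induction n as [|n IH]; intros m f H.
  - rewrite Nat.add_0_r in H. exact H.
  - replace (m + S n)%nat with (S m + n)%nat in H by lia. simpl. apply Hd, IH, H.
Qed.

Lemma Derive_periodic (g : R -> R) L x :
  (forall t, g (t + L) = g t) -> Derive g (x + L) = Derive g x.
Proof.
  intros H. transitivity (Derive (fun t => g (t + L)) x).
  - unfold Derive. f_equal. apply Lim_ext. intros h.
    replace (x + h + L) with (x + L + h) by ring. reflexivity.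
  - apply Derive_ext. auto.
Qed.

Lemma periodic3_pdx L f : periodic3 L f -> periodic3 L (pdx f).
Proof.
  intros H x y z. unfold pdx. repeat split.
  - apply Derive_periodic. intros; apply H.
  - apply Derive_ext. intros; apply H.
  - apply Derive_ext. intros; apply H.
Qed.
Lemma periodic3_pdy L f : periodic3 L f -> periodic3 L (pdy f).
Proof.
  intros H x y z. unfold pdy. repeat split.
  - apply Derive_ext. intros; apply H.
  - apply Derive_periodic. intros; apply H.
  - apply Derive_ext. intros; apply H.
Qed.
Lemma periodic3_pdz L f : periodic3 L f -> periodic3 L (pdz f).
Proof.
  intros H x y z. unfold pdz. repeat split.
  - apply Derive_ext. intros; apply H.
  - apply Derive_ext. intros; apply H.
  - apply Derive_periodic. intros; apply H.
Qed.

Lemma periodic3_iter L (d : fun3 -> fun3) :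
  (forall f, periodic3 L f -> periodic3 L (d f)) ->
  forall n f, periodic3 L f -> periodic3 L (Nat.iter n d f).
Proof. intros Hd n f Hf. induction n; simpl; auto. Qed.

Definition is_integer (k : R) := exists a b : nat, k = INR a - INR b.

Lemma cos_plus_2PI_integer t k : is_integer k -> cos (t + 2 * PI * k) = cos t.
Proof.
  intros [a [b ->]].
  replace (t + 2 * PI * (INR a - INR b)) with ((t - 2 * INR b * PI) + 2 * INR a * PI) by ring.
  rewrite cos_period, <- (cos_period (t - 2 * INR b * PI) b). f_equal. ring.
Qed.

Lemma sin_plus_2PI_integer t k : is_integer k -> sin (t + 2 * PI * k) = sin t.
Proof.
  intros [a [b ->]].
  replace (t + 2 * PI * (INR a - INR b)) with ((t - 2 * INR b * PI) + 2 * INR a * PI) by ring.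
  rewrite sin_period, <- (sin_period (t - 2 * INR b * PI) b). f_equal. ring.
Qed.

Lemma is_integer_abs_ge1 k : is_integer k -> k <> 0 -> 1 <= Rabs k.
Proof.
  intros [a [b ->]] Hk.
  destruct (Nat.lt_trichotomy a b) as [H|[H|H]].
  - assert (INR a + 1 <= INR b) by (rewrite <- S_INR; apply le_INR; lia).
    rewrite Rabs_left by lra. lra.
  - subst. lra.
  - assert (INR b + 1 <= INR a) by (rewrite <- S_INR; apply le_INR; lia).
    rewrite Rabs_right by lra. lra.
Qed.

Lemma is_derive_mult_sin (G A : R -> R) G' w x : is_derive G x G' -> is_derive A x w ->
  is_derive (fun t => G t * sin (A t)) x (G' * sin (A x) + G x * (w * cos (A x))).
Proof.
  intros HG HA. apply (is_derive_mult G (fun t => sin (A t))); auto; [|apply Rmult_comm].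
  apply (is_derive_comp sin A); [apply is_derive_sin|auto].
Qed.

Lemma is_derive_mult_cos (G A : R -> R) G' w x : is_derive G x G' -> is_derive A x w ->
  is_derive (fun t => G t * cos (A t)) x (G' * cos (A x) + G x * (w * - sin (A x))).
Proof.
  intros HG HA. apply (is_derive_mult G (fun t => cos (A t))); auto; [|apply Rmult_comm].
  apply (is_derive_comp cos A); [apply is_derive_cos|auto].
Qed.

Lemma continuous_scal_trig (T : R -> R) w t :
  (forall s, continuous T s) -> continuous (fun s => w * T s) t.
Proof. intros HT. apply (continuous_mult (fun _ => w) T); [apply continuous_const|auto]. Qed.

Lemma continuous_opp_sin t : continuous (fun s => - sin s) t.
Proof. exact (continuous_opp sin t (continuous_sin t)). Qed.

Section Fourier.
Variable L : R.
Hypothesis HL : 0 < L.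

Definition phase k1 k2 k3 x y z := 2 * PI * (k1 * x + k2 * y + k3 * z) / L.

Definition fcos g k1 k2 k3 := intOmega L (fun x y z => g x y z * cos (phase k1 k2 k3 x y z)).
Definition fsin g k1 k2 k3 := intOmega L (fun x y z => g x y z * sin (phase k1 k2 k3 x y z)).

Lemma cont3_mult_phase (T : R -> R) g k1 k2 k3 : (forall t, continuous T t) -> cont3 g ->
  cont3 (fun x y z => g x y z * T (phase k1 k2 k3 x y z)).
Proof.
  intros HT Hg. apply (cont3_mult g); auto. apply (cont3_comp T); auto.
  apply (cont3_ext (fun x y z => (2 * PI * k1 / L) * x + (2 * PI * k2 / L) * y
                                 + (2 * PI * k3 / L) * z)).
  - intros. unfold phase. field. lra.
  - apply cont3_linear.
Qed.

Lemma fourier_relation g g' w k1 k2 k3 : cont3 g -> cont3 g' ->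
  intOmega L (fun x y z => g' x y z * sin (phase k1 k2 k3 x y z)
                           + g x y z * (w * cos (phase k1 k2 k3 x y z))) = 0 ->
  intOmega L (fun x y z => g' x y z * cos (phase k1 k2 k3 x y z)
                           + g x y z * (w * - sin (phase k1 k2 k3 x y z))) = 0 ->
  fsin g' k1 k2 k3 + w * fcos g k1 k2 k3 = 0 /\ fcos g' k1 k2 k3 - w * fsin g k1 k2 k3 = 0.
Proof.
  intros Hg Hg' H1 H2. unfold fsin, fcos.
  pose proof (cont3_mult_phase sin g k1 k2 k3 continuous_sin Hg) as Cgs.
  pose proof (cont3_mult_phase cos g k1 k2 k3 continuous_cos Hg) as Cgc.
  pose proof (cont3_mult_phase sin g' k1 k2 k3 continuous_sin Hg') as Cg's.
  pose proof (cont3_mult_phase cos g' k1 k2 k3 continuous_cos Hg') as Cg'c.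
  assert (Cwc : cont3 (fun x y z => g x y z * (w * cos (phase k1 k2 k3 x y z))))
    by (apply (cont3_mult_phase (fun s => w * cos s)); auto;
        intros; apply continuous_scal_trig, continuous_cos).
  assert (Cws : cont3 (fun x y z => g x y z * (w * - sin (phase k1 k2 k3 x y z))))
    by (apply (cont3_mult_phase (fun s => w * - sin s)); auto;
        intros; apply continuous_scal_trig, continuous_opp_sin).
  split.
  - etransitivity; [|exact H1]. rewrite intOmega_plus by auto.
    f_equal. rewrite <- intOmega_scal by auto. apply intOmega_ext. intros. ring.
  - etransitivity; [|exact H2]. rewrite intOmega_plus by auto.
    unfold Rminus. f_equal. rewrite Ropp_mult_distr_l, <- intOmega_scal by auto.
    apply intOmega_ext. intros. ring.
Qed.

Lemma fourier_relation_x g k1 k2 k3 : is_integer k1 -> Ck 1 g -> periodic3 L g ->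
  fsin (pdx g) k1 k2 k3 + (2 * PI * k1 / L) * fcos g k1 k2 k3 = 0 /\
  fcos (pdx g) k1 k2 k3 - (2 * PI * k1 / L) * fsin g k1 k2 k3 = 0.
Proof.
  intros Hk [Hg [Hd [Hx _]]] Hper. apply Ck_cont in Hx.
  set (w := 2 * PI * k1 / L).
  assert (Hph : forall x y z, is_derive (fun t => phase k1 k2 k3 t y z) x w)
    by (intros; unfold phase, w; auto_derive; [auto|field; lra]).
  assert (Hg' : forall x y z, is_derive (fun t => g t y z) x (pdx g x y z))
    by (intros x y z; apply Derive_correct, (proj1 (Hd x y z))).
  assert (HgL : forall y z, g L y z = g 0 y z)
    by (intros; rewrite <- (proj1 (Hper 0 y z)); f_equal; ring).
  assert (HphL : forall y z, phase k1 k2 k3 L y z = phase k1 k2 k3 0 y z + 2 * PI * k1)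
    by (intros; unfold phase; field; lra).
  apply fourier_relation; auto.
  - apply (intOmega_derive_x_periodic L HL (fun x y z => g x y z * sin (phase k1 k2 k3 x y z))).
    + apply cont3_mult_phase; auto. apply continuous_sin.
    + apply cont3_plus; [apply cont3_mult_phase; auto; apply continuous_sin|].
      apply (cont3_mult_phase (fun s => w * cos s)); auto.
      intros; apply continuous_scal_trig, continuous_cos.
    + intros. apply (is_derive_mult_sin (fun t => g t y z) (fun t => phase k1 k2 k3 t y z)); auto.
    + intros. rewrite HgL, HphL, sin_plus_2PI_integer; auto.
  - apply (intOmega_derive_x_periodic L HL (fun x y z => g x y z * cos (phase k1 k2 k3 x y z))).
    + apply cont3_mult_phase; auto. apply continuous_cos.
    + apply cont3_plus; [apply cont3_mult_phase; auto; apply continuous_cos|].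
      apply (cont3_mult_phase (fun s => w * - sin s)); auto.
      intros; apply continuous_scal_trig, continuous_opp_sin.
    + intros. apply (is_derive_mult_cos (fun t => g t y z) (fun t => phase k1 k2 k3 t y z)); auto.
    + intros. rewrite HgL, HphL, cos_plus_2PI_integer; auto.
Qed.

Lemma fourier_relation_y g k1 k2 k3 : is_integer k2 -> Ck 1 g -> periodic3 L g ->
  fsin (pdy g) k1 k2 k3 + (2 * PI * k2 / L) * fcos g k1 k2 k3 = 0 /\
  fcos (pdy g) k1 k2 k3 - (2 * PI * k2 / L) * fsin g k1 k2 k3 = 0.
Proof.
  intros Hk [Hg [Hd [_ [Hx _]]]] Hper. apply Ck_cont in Hx.
  set (w := 2 * PI * k2 / L).
  assert (Hph : forall x y z, is_derive (fun t => phase k1 k2 k3 x t z) y w)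
    by (intros; unfold phase, w; auto_derive; [auto|field; lra]).
  assert (Hg' : forall x y z, is_derive (fun t => g x t z) y (pdy g x y z))
    by (intros x y z; apply Derive_correct, (proj1 (proj2 (Hd x y z)))).
  assert (HgL : forall x z, g x L z = g x 0 z)
    by (intros; rewrite <- (proj1 (proj2 (Hper x 0 z))); f_equal; ring).
  assert (HphL : forall x z, phase k1 k2 k3 x L z = phase k1 k2 k3 x 0 z + 2 * PI * k2)
    by (intros; unfold phase; field; lra).
  apply fourier_relation; auto.
  - apply (intOmega_derive_y_periodic L HL (fun x y z => g x y z * sin (phase k1 k2 k3 x y z))).
    + apply cont3_mult_phase; auto. apply continuous_sin.
    + apply cont3_plus; [apply cont3_mult_phase; auto; apply continuous_sin|].
      apply (cont3_mult_phase (fun s => w * cos s)); auto.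
      intros; apply continuous_scal_trig, continuous_cos.
    + intros. apply (is_derive_mult_sin (fun t => g x t z) (fun t => phase k1 k2 k3 x t z)); auto.
    + intros. rewrite HgL, HphL, sin_plus_2PI_integer; auto.
  - apply (intOmega_derive_y_periodic L HL (fun x y z => g x y z * cos (phase k1 k2 k3 x y z))).
    + apply cont3_mult_phase; auto. apply continuous_cos.
    + apply cont3_plus; [apply cont3_mult_phase; auto; apply continuous_cos|].
      apply (cont3_mult_phase (fun s => w * - sin s)); auto.
      intros; apply continuous_scal_trig, continuous_opp_sin.
    + intros. apply (is_derive_mult_cos (fun t => g x t z) (fun t => phase k1 k2 k3 x t z)); auto.
    + intros. rewrite HgL, HphL, cos_plus_2PI_integer; auto.
Qed.

Lemma fourier_relation_z g k1 k2 k3 : is_integer k3 -> Ck 1 g -> periodic3 L g ->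
  fsin (pdz g) k1 k2 k3 + (2 * PI * k3 / L) * fcos g k1 k2 k3 = 0 /\
  fcos (pdz g) k1 k2 k3 - (2 * PI * k3 / L) * fsin g k1 k2 k3 = 0.
Proof.
  intros Hk [Hg [Hd [_ [_ Hx]]]] Hper. apply Ck_cont in Hx.
  set (w := 2 * PI * k3 / L).
  assert (Hph : forall x y z, is_derive (fun t => phase k1 k2 k3 x y t) z w)
    by (intros; unfold phase, w; auto_derive; [auto|field; lra]).
  assert (Hg' : forall x y z, is_derive (fun t => g x y t) z (pdz g x y z))
    by (intros x y z; apply Derive_correct, (proj2 (proj2 (Hd x y z)))).
  assert (HgL : forall x y, g x y L = g x y 0)
    by (intros; rewrite <- (proj2 (proj2 (Hper x y 0))); f_equal; ring).
  assert (HphL : forall x y, phase k1 k2 k3 x y L = phase k1 k2 k3 x y 0 + 2 * PI * k3)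
    by (intros; unfold phase; field; lra).
  apply fourier_relation; auto.
  - apply (intOmega_derive_z_periodic L (fun x y z => g x y z * sin (phase k1 k2 k3 x y z))).
    + apply cont3_plus; [apply cont3_mult_phase; auto; apply continuous_sin|].
      apply (cont3_mult_phase (fun s => w * cos s)); auto.
      intros; apply continuous_scal_trig, continuous_cos.
    + intros. apply (is_derive_mult_sin (fun t => g x y t) (fun t => phase k1 k2 k3 x y t)); auto.
    + intros. rewrite HgL, HphL, sin_plus_2PI_integer; auto.
  - apply (intOmega_derive_z_periodic L (fun x y z => g x y z * cos (phase k1 k2 k3 x y z))).
    + apply cont3_plus; [apply cont3_mult_phase; auto; apply continuous_cos|].
      apply (cont3_mult_phase (fun s => w * - sin s)); auto.
      intros; apply continuous_scal_trig, continuous_opp_sin.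
    + intros. apply (is_derive_mult_cos (fun t => g x y t) (fun t => phase k1 k2 k3 x y t)); auto.
    + intros. rewrite HgL, HphL, cos_plus_2PI_integer; auto.
Qed.

Lemma abs_intOmega_mult_phase_le (T : R -> R) g k1 k2 k3 :
  (forall t, continuous T t) -> (forall t, Rabs (T t) <= 1) -> cont3 g ->
  Rabs (intOmega L (fun x y z => g x y z * T (phase k1 k2 k3 x y z)))
  <= intOmega L (fun x y z => Rabs (g x y z)).
Proof.
  intros HT HT1 Hg.
  eapply Rle_trans; [apply intOmega_abs; [auto|apply cont3_mult_phase; auto]|].
  apply intOmega_le; [auto|apply cont3_abs, cont3_mult_phase; auto|apply cont3_abs; auto|].
  intros. rewrite Rabs_mult. pose proof (HT1 (phase k1 k2 k3 x y z)).
  pose proof (Rabs_pos (g x y z)). nra.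
Qed.

Lemma abs_recurrence_pow (c s : nat -> R) w n :
  (forall m, (m < n)%nat -> s (S m) + w * c m = 0 /\ c (S m) - w * s m = 0) ->
  Rabs w ^ n * (Rabs (c O) + Rabs (s O)) = Rabs (c n) + Rabs (s n).
Proof.
  induction n as [|n IH]; intros H; [simpl; ring|].
  destruct (H n ltac:(lia)) as [H1 H2].
  replace (s (S n)) with (- (w * c n)) by lra. replace (c (S n)) with (w * s n) by lra.
  rewrite Rabs_Ropp, !Rabs_mult. simpl. rewrite Rmult_assoc, IH by (intros; apply H; lia). ring.
Qed.

Lemma fourier_decay (d : fun3 -> fun3) w n Phi k1 k2 k3 :
  (forall m f, Ck (S m) f -> Ck m (d f)) ->
  (forall f, periodic3 L f -> periodic3 L (d f)) ->
  (forall g, Ck 1 g -> periodic3 L g ->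
     fsin (d g) k1 k2 k3 + w * fcos g k1 k2 k3 = 0 /\
     fcos (d g) k1 k2 k3 - w * fsin g k1 k2 k3 = 0) ->
  Ck n Phi -> periodic3 L Phi ->
  Rabs w ^ n * (Rabs (fcos Phi k1 k2 k3) + Rabs (fsin Phi k1 k2 k3))
  <= 2 * intOmega L (fun x y z => Rabs (Nat.iter n d Phi x y z)).
Proof.
  intros HCd Hpd Hrel HC Hper.
  change (fcos Phi k1 k2 k3) with (fcos (Nat.iter 0 d Phi) k1 k2 k3).
  change (fsin Phi k1 k2 k3) with (fsin (Nat.iter 0 d Phi) k1 k2 k3).
  rewrite (abs_recurrence_pow (fun m => fcos (Nat.iter m d Phi) k1 k2 k3)
                              (fun m => fsin (Nat.iter m d Phi) k1 k2 k3) w n).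
  - assert (Hn : cont3 (Nat.iter n d Phi)) by (apply (Ck_cont 0), (Ck_iter d HCd 0 n); auto).
    pose proof (abs_intOmega_mult_phase_le cos _ k1 k2 k3 continuous_cos
                  (fun t => ltac:(apply Rabs_le; pose proof (COS_bound t); lra)) Hn).
    pose proof (abs_intOmega_mult_phase_le sin _ k1 k2 k3 continuous_sin
                  (fun t => ltac:(apply Rabs_le; pose proof (SIN_bound t); lra)) Hn).
    unfold fcos, fsin. lra.
  - intros m Hm. apply (Hrel (Nat.iter m d Phi)).
    + apply (Ck_iter d HCd 1 m), (Ck_le _ n); auto.
    + apply periodic3_iter; auto.
Qed.

Lemma fourier_decay_x n Phi k1 k2 k3 : is_integer k1 -> Ck n Phi -> periodic3 L Phi ->
  Rabs (2 * PI * k1 / L) ^ n * (Rabs (fcos Phi k1 k2 k3) + Rabs (fsin Phi k1 k2 k3))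
  <= 2 * intOmega L (fun x y z => Rabs (Nat.iter n pdx Phi x y z)).
Proof.
  intros Hk. apply fourier_decay; [apply Ck_pdx|apply periodic3_pdx|].
  intros; apply fourier_relation_x; auto.
Qed.

Lemma fourier_decay_y n Phi k1 k2 k3 : is_integer k2 -> Ck n Phi -> periodic3 L Phi ->
  Rabs (2 * PI * k2 / L) ^ n * (Rabs (fcos Phi k1 k2 k3) + Rabs (fsin Phi k1 k2 k3))
  <= 2 * intOmega L (fun x y z => Rabs (Nat.iter n pdy Phi x y z)).
Proof.
  intros Hk. apply fourier_decay; [apply Ck_pdy|apply periodic3_pdy|].
  intros; apply fourier_relation_y; auto.
Qed.

Lemma fourier_decay_z n Phi k1 k2 k3 : is_integer k3 -> Ck n Phi -> periodic3 L Phi ->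
  Rabs (2 * PI * k3 / L) ^ n * (Rabs (fcos Phi k1 k2 k3) + Rabs (fsin Phi k1 k2 k3))
  <= 2 * intOmega L (fun x y z => Rabs (Nat.iter n pdz Phi x y z)).
Proof.
  intros Hk. apply fourier_decay; [apply Ck_pdz|apply periodic3_pdz|].
  intros; apply fourier_relation_z; auto.
Qed.

End Fourier.

Definition weight t := / ((1 + Rabs t) * sqrt (1 + Rabs t)).

Lemma weight_pos t : 0 < weight t.
Proof.
  unfold weight. pose proof (Rabs_pos t). apply Rinv_0_lt_compat.
  apply Rmult_lt_0_compat; [lra|apply sqrt_lt_R0; lra].
Qed.

Lemma weight_le t u : Rabs t <= Rabs u -> weight u <= weight t.
Proof.
  intros H. unfold weight. pose proof (Rabs_pos t).
  apply Rinv_le_contravar.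
  - apply Rmult_lt_0_compat; [lra|apply sqrt_lt_R0; lra].
  - apply Rmult_le_compat; try lra; [left; apply sqrt_lt_R0; lra|apply sqrt_le_1_alt; lra].
Qed.

(* Comparison with [int t^(-3/2) = -2 t^(-1/2)], written with [s = sqrt n], [t = sqrt (n+1)]. *)
Lemma inv_cube_le_diff s t : 0 < s -> s < t -> t * t = s * s + 1 ->
  / (t * t * t) <= 2 / s - 2 / t.
Proof.
  intros Hs Hst Ht.
  assert (HD : 0 < s * t * t * t) by (repeat apply Rmult_lt_0_compat; lra).
  replace (2 / s - 2 / t) with ((2 * t * t * t - 2 * s * t * t) * / (s * t * t * t))
    by (field; lra).
  replace (/ (t * t * t)) with (s * / (s * t * t * t)) by (field; lra).
  apply Rmult_le_compat_r; [left; apply Rinv_0_lt_compat; auto|].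
  assert (0 <= (t - s) * (t - s) * (2 * t + s)) by (apply Rmult_le_pos; nra).
  nra.
Qed.

Lemma rsum_weight_nat M : (1 <= M)%nat ->
  rsum M (fun i => / ((1 + INR i) * sqrt (1 + INR i))) <= 3 - 2 / sqrt (INR M).
Proof.
  induction M as [|M IH]; intros HM; [lia|].
  destruct M.
  - simpl. rewrite Rplus_0_r, sqrt_1. replace (/ (1 * 1)) with 1 by field.
    replace (2 / 1) with 2 by field. lra.
  - specialize (IH ltac:(lia)). rewrite rsum_S.
    pose proof (pos_INR (S M)). pose proof (pos_INR M).
    set (s := sqrt (INR (S M))) in *. set (t := sqrt (INR (S (S M)))) in *.
    assert (Hs : 0 < s) by (apply sqrt_lt_R0; rewrite S_INR; lra).
    assert (Hs2 : s * s = INR (S M)) by (apply sqrt_sqrt; lra).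
    assert (Ht2 : t * t = INR (S (S M))) by (apply sqrt_sqrt; pose proof (pos_INR (S (S M))); lra).
    assert (Ht : 0 <= t) by apply sqrt_pos.
    rewrite (S_INR (S M)) in Ht2.
    assert (Hst : s < t) by nra.
    replace (1 + INR (S M)) with (t * t) by (rewrite Ht2; ring).
    rewrite sqrt_square by auto.
    pose proof (inv_cube_le_diff s t Hs Hst ltac:(lra)). lra.
Qed.

Lemma rsum_weight_le K : rsum (2 * K + 1) (fun a => weight (INR a - INR K)) <= 6.
Proof.
  assert (H3 : forall M, rsum M (fun i => weight (INR i)) <= 3).
  { intros M. rewrite (rsum_ext M _ (fun i => / ((1 + INR i) * sqrt (1 + INR i))))
      by (intros; unfold weight; rewrite Rabs_right; auto; apply Rle_ge, pos_INR).
    destruct M as [|M]; [simpl; lra|].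
    pose proof (rsum_weight_nat (S M) ltac:(lia)).
    assert (0 < 2 / sqrt (INR (S M)))
      by (apply Rdiv_lt_0_compat; [lra|apply sqrt_lt_R0, lt_0_INR; lia]).
    lra. }
  replace (2 * K + 1)%nat with (K + S K)%nat by lia.
  rewrite rsum_add.
  assert (Hneg : rsum K (fun a => weight (INR a - INR K)) <= 3).
  { rewrite <- rsum_rev. eapply Rle_trans; [|apply (H3 K)].
    apply rsum_le. intros i Hi. apply weight_le.
    rewrite !minus_INR by lia.
    replace (INR K - INR 1 - INR i - INR K) with (- (1 + INR i)) by (simpl; ring).
    rewrite Rabs_Ropp. pose proof (pos_INR i). rewrite !Rabs_right; lra. }
  assert (Hpos : rsum (S K) (fun i => weight (INR (K + i) - INR K)) <= 3).
  { eapply Rle_trans; [|apply (H3 (S K))].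
    apply rsum_le. intros i Hi. rewrite plus_INR.
    replace (INR K + INR i - INR K) with (INR i) by ring. lra. }
  lra.
Qed.

Lemma inv_pow5_le_weight3 r t1 t2 t3 : 1 <= r ->
  Rabs t1 <= r -> Rabs t2 <= r -> Rabs t3 <= r ->
  / r ^ 5 <= 24 * (weight t1 * weight t2 * weight t3).
Proof.
  intros Hr H1 H2 H3.
  assert (Hrr : Rabs r = r) by (apply Rabs_right; lra).
  assert (A1 : weight r <= weight t1) by (apply weight_le; lra).
  assert (A2 : weight r <= weight t2) by (apply weight_le; lra).
  assert (A3 : weight r <= weight t3) by (apply weight_le; lra).
  pose proof (weight_pos r).
  assert (weight r * weight r * weight r <= weight t1 * weight t2 * weight t3).
  { apply Rmult_le_compat; try (left; apply Rmult_lt_0_compat); auto; try lra.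
    apply Rmult_le_compat; lra. }
  enough (/ r ^ 5 <= 24 * (weight r * weight r * weight r)) by lra.
  unfold weight. rewrite Hrr.
  set (u := sqrt (1 + r)).
  assert (Hu : 0 < u) by (apply sqrt_lt_R0; lra).
  assert (Hu2 : u * u = 1 + r) by (apply sqrt_sqrt; lra).
  assert (Hu3 : u <= 3 / 2 * r) by nra.
  assert (Hp : 0 < (1 + r) * u) by (apply Rmult_lt_0_compat; lra).
  replace (24 * (/ ((1 + r) * u) * / ((1 + r) * u) * / ((1 + r) * u)))
    with (/ ((1 + r) ^ 3 * (u * u) * u / 24)) by (field; lra).
  rewrite Hu2. apply Rinv_le_contravar.
  - apply Rdiv_lt_0_compat; [|lra]. repeat apply Rmult_lt_0_compat; try apply pow_lt; lra.
  - assert ((1 + r) ^ 3 * (1 + r) <= (2 * r) ^ 3 * (2 * r))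
      by (apply Rmult_le_compat; try lra; [apply pow_le; lra|apply pow_incr; lra]).
    assert (Hbig : (1 + r) ^ 3 * (1 + r) * u <= (2 * r) ^ 3 * (2 * r) * (3 / 2 * r))
      by (apply Rmult_le_compat; try lra; apply Rmult_le_pos; try lra; apply pow_le; lra).
    replace ((2 * r) ^ 3 * (2 * r) * (3 / 2 * r)) with (24 * r ^ 5) in Hbig by field.
    unfold Rdiv. lra.
Qed.

Section FourierBound.
Variable L : R.
Hypothesis HL : 0 < L.
Variable Phi : fun3.
Hypothesis HC : Ck 6 Phi.
Hypothesis Hper : periodic3 L Phi.

Definition sixth_derivatives_L1 :=
  intOmega L (fun x y z => Rabs (Nat.iter 6 pdx Phi x y z)) +
  intOmega L (fun x y z => Rabs (Nat.iter 6 pdy Phi x y z)) +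
  intOmega L (fun x y z => Rabs (Nat.iter 6 pdz Phi x y z)).

Lemma sixth_derivatives_L1_parts_nonneg :
  0 <= intOmega L (fun x y z => Rabs (Nat.iter 6 pdx Phi x y z)) /\
  0 <= intOmega L (fun x y z => Rabs (Nat.iter 6 pdy Phi x y z)) /\
  0 <= intOmega L (fun x y z => Rabs (Nat.iter 6 pdz Phi x y z)).
Proof.
  repeat split; apply intOmega_abs_nonneg, (Ck_cont 0); auto.
  - apply (Ck_iter pdx Ck_pdx 0 6); auto.
  - apply (Ck_iter pdy Ck_pdy 0 6); auto.
  - apply (Ck_iter pdz Ck_pdz 0 6); auto.
Qed.

Definition decay_const := 48 * sixth_derivatives_L1 * (L / (2 * PI)) ^ 5.

Lemma decay_const_nonneg : 0 <= decay_const.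
Proof.
  unfold decay_const, sixth_derivatives_L1. pose proof sixth_derivatives_L1_parts_nonneg.
  pose proof PI_RGT_0. apply Rmult_le_pos; [lra|]. apply pow_le, Rdiv_le_0_compat; lra.
Qed.

Lemma Rabs_frequency k : Rabs (2 * PI * k / L) = 2 * PI / L * Rabs k.
Proof.
  pose proof PI_RGT_0. unfold Rdiv. rewrite !Rabs_mult, (Rabs_right 2), (Rabs_right PI) by lra.
  rewrite (Rabs_right (/ L)) by (left; apply Rinv_0_lt_compat; lra). ring.
Qed.

Lemma fourier_decay_max k1 k2 k3 r :
  is_integer k1 -> is_integer k2 -> is_integer k3 ->
  (r = Rabs k1 \/ r = Rabs k2 \/ r = Rabs k3) ->
  (2 * PI / L * r) ^ 6 * (Rabs (fcos L Phi k1 k2 k3) + Rabs (fsin L Phi k1 k2 k3))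
  <= 2 * sixth_derivatives_L1.
Proof.
  intros Z1 Z2 Z3 Hr. pose proof sixth_derivatives_L1_parts_nonneg. unfold sixth_derivatives_L1.
  destruct Hr as [->|[->| ->]]; rewrite <- Rabs_frequency.
  - pose proof (fourier_decay_x L HL 6 Phi k1 k2 k3 Z1 HC Hper). lra.
  - pose proof (fourier_decay_y L HL 6 Phi k1 k2 k3 Z2 HC Hper). lra.
  - pose proof (fourier_decay_z L HL 6 Phi k1 k2 k3 Z3 HC Hper). lra.
Qed.

Lemma fourier_weighted_bound k1 k2 k3 kd :
  is_integer k1 -> is_integer k2 -> is_integer k3 -> (kd = k1 \/ kd = k2 \/ kd = k3) ->
  Rabs (2 * PI * kd / L) * (Rabs (fcos L Phi k1 k2 k3) + Rabs (fsin L Phi k1 k2 k3))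
  <= decay_const * (weight k1 * weight k2 * weight k3).
Proof.
  intros Z1 Z2 Z3 Hkd. pose proof PI_RGT_0.
  set (S := Rabs (fcos L Phi k1 k2 k3) + Rabs (fsin L Phi k1 k2 k3)).
  assert (HS : 0 <= S) by (unfold S; pose proof (Rabs_pos (fcos L Phi k1 k2 k3));
                          pose proof (Rabs_pos (fsin L Phi k1 k2 k3)); lra).
  set (q := 2 * PI / L). assert (Hq : 0 < q) by (unfold q; apply Rdiv_lt_0_compat; lra).
  assert (HW : 0 < weight k1 * weight k2 * weight k3)
    by (repeat apply Rmult_lt_0_compat; apply weight_pos).
  pose proof decay_const_nonneg.
  set (r := Rmax (Rabs k1) (Rmax (Rabs k2) (Rabs k3))).
  assert (Hr : r = Rabs k1 \/ r = Rabs k2 \/ r = Rabs k3)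
    by (unfold r, Rmax; repeat destruct Rle_dec; auto).
  assert (R1 : Rabs k1 <= r) by (unfold r; apply Rmax_l).
  assert (R2 : Rabs k2 <= r)
    by (unfold r; eapply Rle_trans; [apply (Rmax_l _ (Rabs k3))|apply Rmax_r]).
  assert (R3 : Rabs k3 <= r)
    by (unfold r; eapply Rle_trans; [apply (Rmax_r (Rabs k2))|apply Rmax_r]).
  assert (Hkr : Rabs kd <= r) by (destruct Hkd as [->|[->| ->]]; auto).
  rewrite Rabs_frequency. fold q.
  destruct (Req_dec r 0) as [Hr0|Hr0].
  - assert (Rabs kd = 0) by (pose proof (Rabs_pos kd); lra).
    rewrite H1, Rmult_0_r, Rmult_0_l. apply Rmult_le_pos; lra.
  - assert (Hr1 : 1 <= r).
    { destruct Hr as [E|[E|E]]; rewrite E; apply is_integer_abs_ge1; auto;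
        intros Hk; apply Hr0; rewrite E, Hk; apply Rabs_R0. }
    pose proof (fourier_decay_max k1 k2 k3 r Z1 Z2 Z3 Hr) as Hdec. fold q S in Hdec.
    assert (Hqr5 : 0 < (q * r) ^ 5) by (apply pow_lt, Rmult_lt_0_compat; lra).
    assert (A1 : q * Rabs kd * S <= q * r * S)
      by (apply Rmult_le_compat_r; auto; apply Rmult_le_compat_l; lra).
    assert (A2 : q * r * S <= 2 * sixth_derivatives_L1 * (L / (2 * PI)) ^ 5 * / r ^ 5).
    { apply (Rmult_le_reg_l ((q * r) ^ 5)); auto.
      replace ((q * r) ^ 5 * (2 * sixth_derivatives_L1 * (L / (2 * PI)) ^ 5 * / r ^ 5))
        with (2 * sixth_derivatives_L1) by (unfold q; field; lra).
      replace ((q * r) ^ 5 * (q * r * S)) with ((q * r) ^ 6 * S) by ring. auto. }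
    pose proof (inv_pow5_le_weight3 r k1 k2 k3 Hr1 R1 R2 R3) as A3.
    assert (Hc : 0 <= 2 * sixth_derivatives_L1 * (L / (2 * PI)) ^ 5)
      by (unfold decay_const in *; lra).
    pose proof (Rmult_le_compat_l _ _ _ Hc A3). unfold decay_const. lra.
Qed.

End FourierBound.

Definition freq (K a : nat) := INR a - INR K.

Lemma freq_is_integer K a : is_integer (freq K a).
Proof. exists a, K. reflexivity. Qed.

Definition PN_term L K Phi x1 x2 x3 a b c :=
  let k1 := freq K a in let k2 := freq K b in let k3 := freq K c in
  cos (phase L k1 k2 k3 x1 x2 x3) * fcos L Phi k1 k2 k3
  + sin (phase L k1 k2 k3 x1 x2 x3) * fsin L Phi k1 k2 k3.

Lemma PN_eq_sum L K Phi x1 x2 x3 : 0 < L -> cont3 Phi ->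
  PN L K Phi x1 x2 x3 = / L ^ 3 * sum3 (2 * K + 1) (PN_term L K Phi x1 x2 x3).
Proof.
  intros HL HP. unfold PN, sum3. f_equal.
  apply rsum_ext; intros a _; apply rsum_ext; intros b _; apply rsum_ext; intros c _.
  unfold PN_term, freq, fcos, fsin. cbv zeta.
  set (k1 := INR a - INR K). set (k2 := INR b - INR K). set (k3 := INR c - INR K).
  set (px := phase L k1 k2 k3 x1 x2 x3).
  pose proof (cont3_mult_phase L HL cos Phi k1 k2 k3 continuous_cos HP).
  pose proof (cont3_mult_phase L HL sin Phi k1 k2 k3 continuous_sin HP).
  rewrite <- !intOmega_scal, <- intOmega_plus by (auto; apply cont3_scal; auto).
  apply intOmega_ext. intros y1 y2 y3.
  replace (2 * PI * (k1 * (x1 - y1) + k2 * (x2 - y2) + k3 * (x3 - y3)) / L)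
    with (px - phase L k1 k2 k3 y1 y2 y3) by (unfold px, phase; field; lra).
  rewrite cos_minus. ring.
Qed.

Definition grid_phase (K a i : nat) := 2 * PI * freq K a * (INR i + / 2) / INR (2 * K + 1).

Lemma phase_cell_center L K a b c i j l : 0 < L ->
  let h := L / INR (2 * K + 1) in
  phase L (freq K a) (freq K b) (freq K c) ((INR i + / 2) * h) ((INR j + / 2) * h)
    ((INR l + / 2) * h)
  = grid_phase K a i + grid_phase K b j + grid_phase K c l.
Proof.
  intros HL h. assert (0 < INR (2 * K + 1)) by (apply lt_0_INR; lia).
  unfold h, phase, grid_phase. field. lra.
Qed.

Lemma sin_half_step_neq0 K a : (a < 2 * K + 1)%nat -> a <> K ->
  sin (PI * freq K a / INR (2 * K + 1)) <> 0.
Proof.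
  intros Ha HaK. pose proof PI_RGT_0 as HPI.
  assert (HN : INR (2 * K + 1) = 2 * INR K + 1) by (rewrite plus_INR, mult_INR; simpl; ring).
  pose proof (pos_INR K). pose proof (pos_INR a).
  assert (Hfreq : - INR K <= freq K a <= INR K).
  { unfold freq. assert (INR a <= 2 * INR K) by
      (replace (2 * INR K) with (INR (2 * K)) by (rewrite mult_INR; reflexivity);
       apply le_INR; lia).
    lra. }
  assert (Hnz : freq K a <> 0)
    by (unfold freq; intros E; apply HaK, INR_eq; lra).
  set (d := PI * freq K a / INR (2 * K + 1)).
  assert (Hd : - PI < d < PI /\ d <> 0).
  { unfold d. rewrite HN. split; [split|].
    - apply (Rmult_lt_reg_r (2 * INR K + 1)); [lra|]. field_simplify; [nra|lra].
    - apply (Rmult_lt_reg_r (2 * INR K + 1)); [lra|]. field_simplify; [nra|lra].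
    - intros E. apply Hnz. apply (Rmult_eq_reg_l PI); [|lra].
      apply (Rmult_eq_reg_r (/ (2 * INR K + 1))); [|apply Rinv_neq_0_compat; lra]. lra. }
  destruct (Rlt_or_le 0 d).
  - assert (0 < sin d) by (apply sin_gt_0; lra). lra.
  - assert (0 < sin (- d)) by (apply sin_gt_0; lra). rewrite sin_neg in H2. lra.
Qed.

(* For [k <> 0], multiplying by [2 sin (pi k / N)] (nonzero as [|k| <= K < N / 2]) makes
   both sums telescope over a full period. *)
Lemma rsum_grid_trig K a c : (a < 2 * K + 1)%nat ->
  rsum (2 * K + 1) (fun l => cos (c + grid_phase K a l))
    = (if Nat.eqb a K then INR (2 * K + 1) * cos c else 0) /\
  rsum (2 * K + 1) (fun l => sin (c + grid_phase K a l))
    = (if Nat.eqb a K then INR (2 * K + 1) * sin c else 0).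
Proof.
  intros Ha. set (N := (2 * K + 1)%nat).
  assert (HN : 0 < INR N) by (apply lt_0_INR; unfold N; lia).
  destruct (Nat.eqb_spec a K) as [E|E].
  - subst a. unfold grid_phase, freq. rewrite Rminus_diag.
    rewrite (rsum_ext _ _ (fun _ => cos c)), (rsum_ext _ (fun l => sin _) (fun _ => sin c)),
      !rsum_const; [split; reflexivity| |]; intros; f_equal; unfold Rdiv; ring.
  - set (d := PI * freq K a / INR N).
    assert (Hd : sin d <> 0) by (apply sin_half_step_neq0; auto).
    set (T := fun l => sin (c + 2 * PI * freq K a * INR l / INR N)).
    set (U := fun l => cos (c + 2 * PI * freq K a * INR l / INR N)).
    assert (Hshift : forall l, c + 2 * PI * freq K a * INR (S l) / INR N = c + grid_phase K a l + d
                          /\ c + 2 * PI * freq K a * INR l / INR N = c + grid_phase K a l - d)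
      by (intros; rewrite S_INR; unfold grid_phase, d; fold N; split; field; lra).
    assert (E1 : forall l, 2 * sin d * cos (c + grid_phase K a l) = T (S l) - T l).
    { intros l. unfold T. destruct (Hshift l) as [-> ->]. rewrite sin_plus, sin_minus. ring. }
    assert (E2 : forall l, 2 * sin d * sin (c + grid_phase K a l) = - (U (S l) - U l)).
    { intros l. unfold U. destruct (Hshift l) as [-> ->]. rewrite cos_plus, cos_minus. ring. }
    assert (Hper : c + 2 * PI * freq K a * INR N / INR N = c + 2 * PI * freq K a)
      by (field; lra).
    assert (TN : T N = T O).
    { unfold T. rewrite Hper, sin_plus_2PI_integer by apply freq_is_integer.
      f_equal. simpl. unfold Rdiv. ring. }
    assert (UN : U N = U O).
    { unfold U. rewrite Hper, cos_plus_2PI_integer by apply freq_is_integer.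
      f_equal. simpl. unfold Rdiv. ring. }
    split; apply (Rmult_eq_reg_l (2 * sin d)); try lra; rewrite <- rsum_scal, Rmult_0_r.
    + rewrite (rsum_ext _ _ (fun l => T (S l) - T l)) by (intros; apply E1).
      rewrite rsum_telescope. lra.
    + rewrite (rsum_ext _ _ (fun l => (-1) * (U (S l) - U l))) by (intros; rewrite E2; ring).
      rewrite rsum_scal, rsum_telescope. lra.
Qed.

Lemma sum3_grid_trig (f : R -> R) K a b c :
  (forall a c, (a < 2 * K + 1)%nat ->
     rsum (2 * K + 1) (fun l => f (c + grid_phase K a l))
     = if Nat.eqb a K then INR (2 * K + 1) * f c else 0) ->
  (a < 2 * K + 1)%nat -> (b < 2 * K + 1)%nat -> (c < 2 * K + 1)%nat ->
  sum3 (2 * K + 1) (fun i j l => f (grid_phase K a i + grid_phase K b j + grid_phase K c l)) =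
  if (Nat.eqb a K && Nat.eqb b K && Nat.eqb c K)%bool then INR (2 * K + 1) ^ 3 * f 0 else 0.
Proof.
  intros Hf Ha Hb Hc. set (N := (2 * K + 1)%nat). unfold sum3.
  rewrite (rsum_ext _ _ (fun i => rsum N (fun j =>
             if Nat.eqb c K then INR N * f (grid_phase K a i + grid_phase K b j) else 0)))
    by (intros i _; apply rsum_ext; intros j _; apply Hf; auto).
  destruct (Nat.eqb c K);
    [|rewrite Bool.andb_false_r, (rsum_ext _ _ (fun _ => 0)) by (intros; apply rsum_zero);
      apply rsum_zero].
  rewrite Bool.andb_true_r.
  rewrite (rsum_ext _ _ (fun i => INR N * (if Nat.eqb b K then INR N * f (0 + grid_phase K a i)
                                           else 0))).
  2: { intros i _. rewrite rsum_scal. f_equal. rewrite Hf by auto.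
       destruct (Nat.eqb b K); auto. do 2 f_equal. ring. }
  destruct (Nat.eqb b K);
    [|rewrite Bool.andb_false_r, (rsum_ext _ _ (fun _ => 0)) by (intros; ring); apply rsum_zero].
  rewrite Bool.andb_true_r.
  rewrite (rsum_ext _ _ (fun i => (INR N * INR N) * f (0 + grid_phase K a i))) by (intros; ring).
  rewrite rsum_scal, Hf by auto.
  destruct (Nat.eqb a K); unfold N; ring.
Qed.

Lemma PN_grid_mass L Phi K : 0 < L -> C6per L Phi ->
  let N := (2 * K + 1)%nat in let h := L / INR N in
  intOmega L Phi = ip N h (Ph h (PN L K Phi)) cst1.
Proof.
  intros HL [Hper HC] N h.
  assert (HP : cont3 Phi) by (apply (Ck_cont 6); auto).
  assert (HN : (0 < N)%nat) by (unfold N; lia).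
  assert (Hcos : forall a b c, (a < N)%nat -> (b < N)%nat -> (c < N)%nat ->
    sum3 N (fun i j l => cos (grid_phase K a i + grid_phase K b j + grid_phase K c l)) =
    if (Nat.eqb a K && Nat.eqb b K && Nat.eqb c K)%bool then INR N ^ 3 else 0).
  { intros. unfold N in *. rewrite sum3_grid_trig, cos_0, Rmult_1_r; auto.
    intros; apply rsum_grid_trig; auto. }
  assert (Hsin : forall a b c, (a < N)%nat -> (b < N)%nat -> (c < N)%nat ->
    sum3 N (fun i j l => sin (grid_phase K a i + grid_phase K b j + grid_phase K c l)) = 0).
  { intros. unfold N in *. rewrite sum3_grid_trig, sin_0, Rmult_0_r; auto.
    - destruct (andb (andb _ _) _); reflexivity.
    - intros; apply rsum_grid_trig; auto. }
  unfold ip.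
  rewrite (sum3_ext N _ (fun i j l => / L ^ 3 * sum3 N (fun a b c =>
      fcos L Phi (freq K a) (freq K b) (freq K c)
        * cos (grid_phase K a i + grid_phase K b j + grid_phase K c l) +
      fsin L Phi (freq K a) (freq K b) (freq K c)
        * sin (grid_phase K a i + grid_phase K b j + grid_phase K c l)))).
  2: { intros i j l _ _ _. unfold cst1, Ph. rewrite Rmult_1_r, PN_eq_sum by auto.
       f_equal. apply sum3_ext. intros a b c _ _ _. unfold PN_term. cbv zeta.
       unfold h, N. rewrite phase_cell_center by auto. ring. }
  rewrite sum3_scal, sum3_swap.
  rewrite (sum3_ext N _ (fun a b c => if (Nat.eqb a K && Nat.eqb b K && Nat.eqb c K)%bool
             then fcos L Phi (freq K a) (freq K b) (freq K c) * INR N ^ 3 else 0)).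
  2: { intros a b c Ha Hb Hc. rewrite sum3_plus, !sum3_scal, Hcos, Hsin by auto.
       destruct (Nat.eqb a K && Nat.eqb b K && Nat.eqb c K)%bool; ring. }
  rewrite (sum3_indicator N K
             (fun a b c => fcos L Phi (freq K a) (freq K b) (freq K c) * INR N ^ 3))
    by (unfold N; lia).
  unfold freq. rewrite Rminus_diag.
  assert (E : fcos L Phi 0 0 0 = intOmega L Phi).
  { unfold fcos. apply intOmega_ext. intros.
    replace (phase L 0 0 0 x y z) with 0 by (unfold phase; field; lra). rewrite cos_0. ring. }
  rewrite E.
  replace (h ^ 3 * (/ L ^ 3 * (intOmega L Phi * INR N ^ 3)))
    with ((h ^ 3 * INR N ^ 3) * / L ^ 3 * intOmega L Phi) by ring.
  unfold h. rewrite grid_volume by auto. field. lra.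
Qed.

Lemma Rabs_cos_sub_le u v : Rabs (cos u - cos v) <= Rabs (u - v).
Proof.
  destruct (MVT_abs cos (fun c => - sin c) v u) as [c [Hc _]].
  - intros; apply derivable_pt_lim_cos.
  - rewrite Hc, Rabs_Ropp. pose proof (SIN_bound c).
    assert (Rabs (sin c) <= 1) by (apply Rabs_le; lra).
    pose proof (Rabs_pos (u - v)). nra.
Qed.

Lemma Rabs_sin_sub_le u v : Rabs (sin u - sin v) <= Rabs (u - v).
Proof.
  destruct (MVT_abs sin cos v u) as [c [Hc _]].
  - intros; apply derivable_pt_lim_sin.
  - rewrite Hc. pose proof (COS_bound c).
    assert (Rabs (cos c) <= 1) by (apply Rabs_le; lra).
    pose proof (Rabs_pos (u - v)). nra.
Qed.

(* The second alternative is a step across the periodic boundary. *)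
Lemma trig_step_le u u' w h k : 0 < h -> is_integer k ->
  (u' = u + w * h \/ u' + 2 * PI * k = u + w * h) ->
  Rabs (cos u' - cos u) <= Rabs w * h /\ Rabs (sin u' - sin u) <= Rabs w * h.
Proof.
  intros Hh Hk Hu.
  assert (Hwh : Rabs (u + w * h - u) = Rabs w * h)
    by (replace (u + w * h - u) with (w * h) by ring; rewrite Rabs_mult, (Rabs_right h); lra).
  destruct Hu as [->|E].
  - rewrite <- Hwh. split; [apply Rabs_cos_sub_le|apply Rabs_sin_sub_le].
  - rewrite <- (cos_plus_2PI_integer u' k), <- (sin_plus_2PI_integer u' k), E, <- Hwh by auto.
    split; [apply Rabs_cos_sub_le|apply Rabs_sin_sub_le].
Qed.

Section PNLipschitz.
Variable L : R.
Hypothesis HL : 0 < L.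
Variable Phi : fun3.
Hypothesis HC : Ck 6 Phi.
Hypothesis Hper : periodic3 L Phi.

Lemma PN_term_sub_le K x1 x2 x3 y1 y2 y3 h a b c kd : 0 < h ->
  let k1 := freq K a in let k2 := freq K b in let k3 := freq K c in
  (kd = k1 \/ kd = k2 \/ kd = k3) ->
  Rabs (cos (phase L k1 k2 k3 y1 y2 y3) - cos (phase L k1 k2 k3 x1 x2 x3))
    <= Rabs (2 * PI * kd / L) * h ->
  Rabs (sin (phase L k1 k2 k3 y1 y2 y3) - sin (phase L k1 k2 k3 x1 x2 x3))
    <= Rabs (2 * PI * kd / L) * h ->
  Rabs (PN_term L K Phi y1 y2 y3 a b c - PN_term L K Phi x1 x2 x3 a b c)
    <= h * (decay_const L Phi * (weight k1 * weight k2 * weight k3)).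
Proof.
  intros Hh k1 k2 k3 Hkd Hcos Hsin. unfold PN_term. fold k1 k2 k3.
  pose proof (fourier_weighted_bound L HL Phi HC Hper k1 k2 k3 kd (freq_is_integer K a)
                (freq_is_integer K b) (freq_is_integer K c) Hkd) as Hbound.
  set (cy := cos (phase L k1 k2 k3 y1 y2 y3)) in *.
  set (cx := cos (phase L k1 k2 k3 x1 x2 x3)) in *.
  set (sy := sin (phase L k1 k2 k3 y1 y2 y3)) in *.
  set (sx := sin (phase L k1 k2 k3 x1 x2 x3)) in *.
  set (C := fcos L Phi k1 k2 k3) in *. set (S := fsin L Phi k1 k2 k3) in *.
  set (w := Rabs (2 * PI * kd / L)) in *.
  replace (cy * C + sy * S - (cx * C + sx * S)) with ((cy - cx) * C + (sy - sx) * S) by ring.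
  eapply Rle_trans; [apply Rabs_triang|]. rewrite !Rabs_mult.
  pose proof (Rabs_pos C). pose proof (Rabs_pos S).
  assert (Rabs (cy - cx) * Rabs C <= w * h * Rabs C) by (apply Rmult_le_compat_r; auto).
  assert (Rabs (sy - sx) * Rabs S <= w * h * Rabs S) by (apply Rmult_le_compat_r; auto).
  assert (h * (w * (Rabs C + Rabs S))
          <= h * (decay_const L Phi * (weight k1 * weight k2 * weight k3)))
    by (apply Rmult_le_compat_l; lra).
  lra.
Qed.

Lemma PN_difference_quotient_le K x1 x2 x3 y1 y2 y3 h : 0 < h ->
  (forall a b c, (a < 2 * K + 1)%nat -> (b < 2 * K + 1)%nat -> (c < 2 * K + 1)%nat ->
     let k1 := freq K a in let k2 := freq K b in let k3 := freq K c in
     exists kd, (kd = k1 \/ kd = k2 \/ kd = k3) /\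
     Rabs (cos (phase L k1 k2 k3 y1 y2 y3) - cos (phase L k1 k2 k3 x1 x2 x3))
       <= Rabs (2 * PI * kd / L) * h /\
     Rabs (sin (phase L k1 k2 k3 y1 y2 y3) - sin (phase L k1 k2 k3 x1 x2 x3))
       <= Rabs (2 * PI * kd / L) * h) ->
  Rabs ((PN L K Phi y1 y2 y3 - PN L K Phi x1 x2 x3) / h) <= / L ^ 3 * (decay_const L Phi * 216).
Proof.
  intros Hh Hsteps.
  assert (HP : cont3 Phi) by (apply (Ck_cont 6); auto).
  set (N := (2 * K + 1)%nat).
  rewrite !PN_eq_sum by auto. fold N.
  rewrite <- Rmult_minus_distr_l, <- sum3_minus.
  assert (HL3 : 0 < / L ^ 3) by (apply Rinv_0_lt_compat, pow_lt; auto).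
  unfold Rdiv. rewrite Rmult_assoc, Rabs_mult, (Rabs_right (/ L ^ 3)) by lra.
  apply Rmult_le_compat_l; [lra|].
  rewrite Rabs_mult, (Rabs_right (/ h)) by (left; apply Rinv_0_lt_compat; auto).
  apply (Rmult_le_reg_r h); auto. rewrite Rmult_assoc, Rinv_l, Rmult_1_r by lra.
  eapply Rle_trans; [apply sum3_abs|].
  eapply Rle_trans.
  { apply (sum3_le N _ (fun a b c =>
             h * (decay_const L Phi
                  * (weight (freq K a) * weight (freq K b) * weight (freq K c))))).
    intros a b c Ha Hb Hc. destruct (Hsteps a b c Ha Hb Hc) as (kd & Hkd & Hcos & Hsin).
    apply (PN_term_sub_le K _ _ _ _ _ _ h a b c kd); auto. }
  rewrite (sum3_ext N _ (fun a b c => (h * decay_const L Phi)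
             * (weight (freq K a) * weight (freq K b) * weight (freq K c)))) by (intros; ring).
  rewrite sum3_scal, sum3_prod.
  assert (HW : rsum N (fun a => weight (freq K a)) <= 6) by apply rsum_weight_le.
  assert (HW0 : 0 <= rsum N (fun a => weight (freq K a))).
  { rewrite <- (Rmult_0_r (INR N)), <- rsum_const. apply rsum_le. intros; left; apply weight_pos. }
  pose proof (decay_const_nonneg L HL Phi HC).
  set (s := rsum N (fun a => weight (freq K a))) in *.
  assert (s * s * s <= 216) by (assert (s * s <= 36) by nra; nra).
  assert (h * decay_const L Phi * (s * s * s) <= h * decay_const L Phi * 216)
    by (apply Rmult_le_compat_l; auto; apply Rmult_le_pos; lra).
  lra.
Qed.

End PNLipschitz.

Lemma grid_grad_PN_bounded L Phi : 0 < L -> C6per L Phi -> exists D, forall K i j k,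
  let N := (2 * K + 1)%nat in let h := L / INR N in
  (i < N)%nat -> (j < N)%nat -> (k < N)%nat ->
  Rabs (Dx N h (Ph h (PN L K Phi)) i j k) <= D /\
  Rabs (Dy N h (Ph h (PN L K Phi)) i j k) <= D /\
  Rabs (Dz N h (Ph h (PN L K Phi)) i j k) <= D.
Proof.
  intros HL [Hper HC]. exists (/ L ^ 3 * (decay_const L Phi * 216)).
  intros K i j l N h Hi Hj Hl.
  assert (HN : 0 < INR N) by (apply lt_0_INR; unfold N; lia).
  assert (Hh : 0 < h) by (unfold h; apply Rdiv_lt_0_compat; auto).
  unfold Dx, Dy, Dz, Ph. repeat split; apply PN_difference_quotient_le; auto;
    intros a b c _ _ _ k1 k2 k3.
  - exists k1. split; [auto|]. apply (trig_step_le _ _ _ h k1 Hh (freq_is_integer K a)).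
    destruct (INR_sp N i Hi) as [E|E]; rewrite E; [left|right]; unfold phase, h; field; lra.
  - exists k2. split; [auto|]. apply (trig_step_le _ _ _ h k2 Hh (freq_is_integer K b)).
    destruct (INR_sp N j Hj) as [E|E]; rewrite E; [left|right]; unfold phase, h; field; lra.
  - exists k3. split; [auto|]. apply (trig_step_le _ _ _ h k3 Hh (freq_is_integer K c)).
    destruct (INR_sp N l Hl) as [E|E]; rewrite E; [left|right]; unfold phase, h; field; lra.
Qed.

Lemma Eh_le_of_grad_bounded L N eps theta a D : (0 < N)%nat -> 0 < L -> 0 <= theta ->
  let h := L / INR N in
  (forall i j k, (i < N)%nat -> (j < N)%nat -> (k < N)%nat -> -1 < a i j k < 1) ->
  (forall i j k, (i < N)%nat -> (j < N)%nat -> (k < N)%nat ->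
     Rabs (Dx N h a i j k) <= D /\ Rabs (Dy N h a i j k) <= D /\ Rabs (Dz N h a i j k) <= D) ->
  Eh N h eps theta a <= 4 * L ^ 3 + eps ^ 2 / 2 * (L ^ 3 * (3 * D ^ 2)).
Proof.
  intros HN HL Hth h Ha HD.
  assert (Hh : 0 < h) by (unfold h; apply Rdiv_lt_0_compat; [|apply lt_0_INR]; auto).
  pose proof (Eh_le N h eps theta a Hh Hth Ha) as Hup.
  pose proof (gradnorm2sq_le N h a D Hh HD) as Hgrad.
  unfold h in *. rewrite grid_volume in Hup, Hgrad by auto.
  assert (eps ^ 2 / 2 * gradnorm2sq N (L / INR N) a <= eps ^ 2 / 2 * (L ^ 3 * (3 * D ^ 2)))
    by (apply Rmult_le_compat_l; auto; pose proof (pow2_ge_0 eps); lra).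
  lra.
Qed.

Lemma sqrt_gradnorm2sq_le L N eps theta a C : (0 < N)%nat -> 0 < L -> 0 < eps -> 0 <= theta ->
  let h := L / INR N in
  (forall i j k, (i < N)%nat -> (j < N)%nat -> (k < N)%nat -> -1 < a i j k < 1) ->
  Eh N h eps theta a <= C ->
  sqrt (gradnorm2sq N h a) <= sqrt (2 * C + theta * L ^ 3) / eps.
Proof.
  intros HN HL Heps Hth h Ha HC.
  assert (Hh : 0 < h) by (unfold h; apply Rdiv_lt_0_compat; [|apply lt_0_INR]; auto).
  pose proof (Eh_ge N h eps theta a Hh Hth Ha) as Hlow.
  replace (h ^ 3 * INR N ^ 3) with (L ^ 3) in Hlow by (unfold h; rewrite grid_volume; auto).
  assert (Heps2 : 0 < eps ^ 2) by (apply pow_lt; auto).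
  replace (sqrt (2 * C + theta * L ^ 3) / eps) with (sqrt ((2 * C + theta * L ^ 3) / eps ^ 2))
    by (rewrite sqrt_div_alt, sqrt_pow2 by lra; reflexivity).
  apply sqrt_le_1_alt. apply (Rmult_le_reg_r (eps ^ 2)); auto.
  unfold Rdiv. rewrite Rmult_assoc, Rinv_l by lra. lra.
Qed.

Theorem theorem4p1 :
  forall (L eps theta0 M0 : R) (M : R -> R) (Phi : fun3),
    0 < L -> 0 < eps -> 0 < theta0 -> 0 < M0 ->
    (forall x, -1 <= x <= 1 -> M0 <= M x) ->
    C6per L Phi ->
    (exists c, c < 1 /\ forall x y z, Rabs (Phi x y z) <= c) ->
    exists C6 : R, 0 < C6 /\
    forall (K : nat) (dt : R) (phi mu : nat -> gf),
      let N := (2 * K + 1)%nat in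
      let h := L / INR N in
      0 < dt ->
      (forall i j k, (i < N)%nat -> (j < N)%nat -> (k < N)%nat ->
         phi 0%nat i j k = Ph h (PN L K Phi) i j k) ->
      (* the iterates stay in (-1,1) (so that the logarithms are defined) *)
      (forall m i j k, (i < N)%nat -> (j < N)%nat -> (k < N)%nat ->
         -1 < phi m i j k < 1) ->
      (* the scheme *)
      (forall m i j k, (1 <= m)%nat -> (i < N)%nat -> (j < N)%nat -> (k < N)%nat ->
         (phi m i j k - phi (m - 1)%nat i j k) / dt =
           divh N h (fmul (mobface N M (phi (m - 1)%nat)) (grad N h (mu m))) i j k /\
         mu m i j k =
           ln (1 + phi m i j k) - ln (1 - phi m i j k)
           - theta0 * phi (m - 1)%nat i j k
           - eps ^ 2 * lap N h (phi m) i j k) ->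
      intOmega L Phi = ip N h (phi 0%nat) cst1 /\
      (forall m, (1 <= m)%nat ->
         Eh N h eps theta0 (phi m)
         + dt * fip N h (fmul (mobface N M (phi (m - 1)%nat)) (grad N h (mu m)))
                        (grad N h (mu m))
         <= Eh N h eps theta0 (phi (m - 1)%nat)) /\
      (forall m, Eh N h eps theta0 (phi m) <= Eh N h eps theta0 (phi 0%nat)
                 /\ Eh N h eps theta0 (phi 0%nat) <= C6) /\
      (forall m, sqrt (gradnorm2sq N h (phi m))
                 <= sqrt (2 * C6 + theta0 * L ^ 3) / eps).
Proof.
  intros L eps theta0 M0 M Phi HL Heps Hth HM0 HM HPhi _.
  destruct (grid_grad_PN_bounded L Phi HL HPhi) as [D HD].
  exists (4 * L ^ 3 + eps ^ 2 / 2 * (L ^ 3 * (3 * D ^ 2)) + 1). split.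
  { pose proof (pow_lt L 3 HL). pose proof (pow2_ge_0 eps). pose proof (pow2_ge_0 D).
    assert (0 <= eps ^ 2 / 2 * (L ^ 3 * (3 * D ^ 2))) by (apply Rmult_le_pos; nra). lra. }
  intros K dt phi mu N h Hdt Hinit Hbd Hs.
  assert (HN : (0 < N)%nat) by (unfold N; lia).
  assert (Hh : 0 < h) by (unfold h; apply Rdiv_lt_0_compat, lt_0_INR; auto).
  assert (Hstep : forall m, (1 <= m)%nat ->
    Eh N h eps theta0 (phi m)
    + dt * fip N h (fmul (mobface N M (phi (m - 1)%nat)) (grad N h (mu m))) (grad N h (mu m))
    <= Eh N h eps theta0 (phi (m - 1)%nat))
    by (intros m Hm; apply Eh_step; auto; lra).
  assert (Hdecr : Un_decreasing (fun m => Eh N h eps theta0 (phi m))).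
  { intros m. specialize (Hstep (S m) ltac:(lia)). replace (S m - 1)%nat with m in Hstep by lia.
    pose proof (fip_mobility_nonneg N h M M0 (phi m) (mu (S m)) HN Hh HM0 HM (Hbd m)). nra. }
  assert (H0 : Eh N h eps theta0 (phi 0%nat) <= 4 * L ^ 3 + eps ^ 2 / 2 * (L ^ 3 * (3 * D ^ 2))).
  { apply Eh_le_of_grad_bounded; auto; [lra|]. intros i j k Hi Hj Hk.
    unfold Dx, Dy, Dz. rewrite !Hinit by (auto; apply sp_lt; auto). apply HD; auto. }
  split; [|split; [exact Hstep|split]].
  - rewrite (PN_grid_mass L Phi K HL HPhi). unfold ip. f_equal.
    apply sum3_ext. intros. rewrite Hinit; auto.
  - intros m. split; [apply (decreasing_prop _ 0 m Hdecr); lia|lra].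
  - intros m. apply sqrt_gradnorm2sq_le; auto; [lra|].
    pose proof (decreasing_prop _ 0 m Hdecr ltac:(lia)) as Hm. cbv beta in Hm.
    change (L / INR N) with h. lra.
Qed.
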